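(* Let $J\in\mathbb Z_{>0}$, $i_1,i_2\in\mathbb Z_{\ge0}$ and $j_1,j_2\in\{0,1,\dots,J\}$ with $i_1+j_1=i_2+j_2$, and set $v=-\eta\Lambda$. Then $$W_J(i_1,j_1;i_2,j_2\mid -\eta\Lambda,\lambda)=f(2\eta)^{i_2-i_1}\frac{\mathbf 1_{i_1\ge j_2}[2\eta J]_J}{[2\eta j_1]_{j_1}[2\eta(J-j_1)]_{J-j_1}}\frac{[2\eta\Lambda]_{i_1}}{[2\eta\Lambda]_{i_2}}\frac{[2\eta i_1]_{j_2}[2\eta(\Lambda-i_1)]_{J-j_2}}{[2\eta\Lambda]_J}$$ $$\times\frac{[\lambda+2\eta i_2]_{J-j_1}[\lambda+2\eta(i_2+j_1-\Lambda-1)]_{j_1}}{[\lambda+2\eta j_1]_{J-j_1}[\lambda+2\eta(2j_1-J-1)]_{j_1}}.$$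
   Context: Fix $\eta,\tau\in\mathbb C$, $\operatorname{Im}\tau>0$. $f(z)$ denotes either $\theta(z)=-\sum_{j\in\mathbb Z}\exp\big(\pi\mathbf i\tau(j+\tfrac12)^2+2\pi\mathbf i(j+\tfrac12)(z+\tfrac12)\big)$ or $\sin(\pi z)$. Elliptic Pochhammer: $[a]_k=\prod_{m=0}^{k-1}f(a-2\eta m)$ for $k\ge0$, $[a]_k=\prod_{m=1}^{-k}f(a+2\eta m)^{-1}$ for $k<0$. Unfused weights ($k\ge0$): $W_1(k,0;k,0\mid v,\lambda,\Lambda)=\frac{f(\eta(\Lambda-2k)-v)f(\lambda+2k\eta)}{f(\eta\Lambda-v)f(\lambda)}$, $W_1(k,1;k+1,0\mid\cdot)=\frac{f(v+\lambda+\eta(2k+2-\Lambda))f(2\eta)}{f(\eta\Lambda-v)f(\lambda)}$, $W_1(k,0;k-1,1\mid\cdot)=\frac{f(\lambda-v+\eta(2k-2-\Lambda))f(2\eta(\Lambda+1-k))f(2k\eta)}{f(\eta\Lambda-v)f(\lambda)f(2\eta)}$ ($k\ge1$), $W_1(k,1;k,1\mid\cdot)=\frac{f(\eta(2k-\Lambda)-v)f(\lambda+2\eta(k-\Lambda))}{f(\eta\Lambda-v)f(\lambda)}$, and $0$ otherwise. Column weights: for $\mathcal J_1=(j_{1,k})_{k=1}^J,\mathcal J_2=(j_{2,k})_{k=1}^J\in\{0,1\}^J$, $i^{(1)}=i_1$, $i^{(k+1)}=i^{(k)}+j_{1,k}-j_{2,k}$, $\Phi_J=\lambda$, $\Phi_k=\Phi_{k+1}\mp2\eta$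 according as $j_{1,k+1}=0$ or $1$; $W_J(i_1,\mathcal J_1;i_2,\mathcal J_2\mid v,\lambda)=\prod_{k=1}^JW_1(i^{(k)},j_{1,k};i^{(k+1)},j_{2,k}\mid v+2\eta(k-1),\Phi_k,\Lambda)$ if all $i^{(k)}\ge0$ and $i^{(J+1)}=i_2$, else $0$. Fused weight: $W_J(i_1,j_1;i_2,j_2\mid v,\lambda)=\sum_{|\mathcal J_1|=j_1}W_J(i_1,\mathcal J_1;i_2,\mathcal K\mid v,\lambda)$ for any $\mathcal K$ with $|\mathcal K|=j_2$ (independent of $\mathcal K$); $\Lambda$ is suppressed. *)

From Stdlib Require Import Reals ZArith List Bool.
Import ListNotations.
Open Scope R_scope.

Record Cplx := mkC { re : R; im : R }.

Definition Czero : Cplx := mkC 0 0.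
Definition Cone : Cplx := mkC 1 0.
Definition Ci : Cplx := mkC 0 1.
Definition RtoC (x : R) : Cplx := mkC x 0.
Definition ZtoC (z : Z) : Cplx := mkC (IZR z) 0.
Definition Cadd (a b : Cplx) : Cplx := mkC (re a + re b) (im a + im b).
Definition Copp (a : Cplx) : Cplx := mkC (- re a) (- im a).
Definition Csub (a b : Cplx) : Cplx := Cadd a (Copp b).
Definition Cmul (a b : Cplx) : Cplx :=
  mkC (re a * re b - im a * im b) (re a * im b + im a * re b).
Definition Cinv (a : Cplx) : Cplx :=
  mkC (re a / (re a * re a + im a * im a)) (- im a / (re a * re a + im a * im a)).
Definition Cdiv (a b : Cplx) : Cplx := Cmul a (Cinv b).

Declare Scope C_scope.
Delimit Scope C_scope with Cplx.
Infix "+" := Cadd : C_scope.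
Infix "-" := Csub : C_scope.
Infix "*" := Cmul : C_scope.
Infix "/" := Cdiv : C_scope.
Notation "- a" := (Copp a) : C_scope.

Fixpoint Cpow (a : Cplx) (n : nat) : Cplx :=
  match n with O => Cone | S n => Cmul a (Cpow a n) end.
Definition Cpowz (a : Cplx) (z : Z) : Cplx :=
  if (0 <=? z)%Z then Cpow a (Z.to_nat z) else Cinv (Cpow a (Z.to_nat (- z))).

Definition Cexp (z : Cplx) : Cplx := mkC (exp (re z) * cos (im z)) (exp (re z) * sin (im z)).
Definition Csin (z : Cplx) : Cplx :=
  Cdiv (Csub (Cexp (Cmul Ci z)) (Cexp (Copp (Cmul Ci z)))) (Cmul (RtoC 2) Ci).
Definition CPI : Cplx := RtoC PI.

Definition Csum (l : list Cplx) : Cplx := fold_right Cadd Czero l.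
Definition Cprod (l : list Cplx) : Cplx := fold_right Cmul Cone l.

Definition Cseq_cv (u : nat -> Cplx) (l : Cplx) : Prop :=
  Un_cv (fun n => re (u n)) (re l) /\ Un_cv (fun n => im (u n)) (im l).

(** Sum over j in Z of a (two-sided) series, as limit of symmetric partial
    sums  sum_{j=-N}^{N} a j. *)
Definition Zsym_partial (a : Z -> Cplx) (N : nat) : Cplx :=
  Csum (map (fun k => a (Z.of_nat k - Z.of_nat N)%Z) (seq 0 (2 * N + 1))).
Definition Zseries_sum (a : Z -> Cplx) (l : Cplx) : Prop :=
  Cseq_cv (Zsym_partial a) l.

Definition theta_term (tau z : Cplx) (j : Z) : Cplx :=
  let h := Cadd (ZtoC j) (RtoC (1/2)) in
  Cexp (Cadd (Cmul (Cmul (Cmul CPI Ci) tau) (Cmul h h))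
             (Cmul (Cmul (Cmul (RtoC 2) (Cmul CPI Ci)) h) (Cadd z (RtoC (1/2))))).

Definition is_theta (tau : Cplx) (th : Cplx -> Cplx) : Prop :=
  forall z : Cplx, Zseries_sum (theta_term tau z) (Copp (th z)).

Definition sinpi (z : Cplx) : Cplx := Csin (Cmul CPI z).

Definition poch (f : Cplx -> Cplx) (eta a : Cplx) (k : Z) : Cplx :=
  if (0 <=? k)%Z then
    Cprod (map (fun m => f (Csub a (Cmul (RtoC 2) (Cmul eta (RtoC (INR m))))))
               (seq 0 (Z.to_nat k)))
  else
    Cprod (map (fun m => Cinv (f (Cadd a (Cmul (RtoC 2) (Cmul eta (RtoC (INR m)))))))
               (seq 1 (Z.to_nat (- k)))).

Definition two (x : Cplx) : Cplx := Cmul (RtoC 2) x.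

Definition W1 (f : Cplx -> Cplx) (eta : Cplx) (k : Z) (a : bool) (k' : Z) (b : bool)
    (v lam Lam : Cplx) : Cplx :=
  let kC := ZtoC k in
  let den := Cmul (f (Csub (Cmul eta Lam) v)) (f lam) in
  if (0 <=? k)%Z then
  match a, b with
  | false, false =>
      if (k' =? k)%Z then
        Cdiv (Cmul (f (Csub (Cmul eta (Csub Lam (two kC))) v))
                   (f (Cadd lam (two (Cmul kC eta)))))
             den
      else Czero
  | true, false =>
      if (k' =? k + 1)%Z then
        Cdiv (Cmul (f (Cadd (Cadd v lam)
                            (Cmul eta (Csub (Cadd (two kC) (RtoC 2)) Lam))))
                   (f (two eta)))
             den
      else Czero
  | false, true =>
      if ((k' =? k - 1) && (1 <=? k))%Z then
        Cdiv (Cmul (Cmul (f (Cadd (Csub lam v)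
                                  (Cmul eta (Csub (Csub (two kC) (RtoC 2)) Lam))))
                         (f (two (Cmul eta (Csub (Cadd Lam Cone) kC)))))
                   (f (two (Cmul kC eta))))
             (Cmul den (f (two eta)))
      else Czero
  | true, true =>
      if (k' =? k)%Z then
        Cdiv (Cmul (f (Csub (Cmul eta (Csub (two kC) Lam)) v))
                   (f (Cadd lam (two (Cmul eta (Csub kC Lam))))))
             den
      else Czero
  end
  else Czero.

Definition b2Z (b : bool) : Z := if b then 1%Z else 0%Z.

(** k-th entry (k = 1..J) of a 0/1 sequence given as a list *)
Definition ent (l : list bool) (k : nat) : bool := nth (k - 1) l false.

(** i^(k) for k >= 1:  i^(1) = i1, i^(k+1) = i^(k) + j_{1,k} - j_{2,k} *)
Definition istate (i1 : nat) (J1 J2 : list bool) (k : nat) : Z :=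
  (Z.of_nat i1 +
   fold_right Z.add 0%Z
     (map (fun m => b2Z (ent J1 m) - b2Z (ent J2 m))%Z (seq 1 (k - 1))))%Z.

(** Phi_J = lam,  Phi_k = Phi_{k+1} - 2 eta if j_{1,k+1} = 0, + 2 eta if = 1 *)
Definition Phi (eta lam : Cplx) (J : nat) (J1 : list bool) (k : nat) : Cplx :=
  Cadd lam (two (Cmul eta (ZtoC
     (fold_right Z.add 0%Z
        (map (fun m => if ent J1 m then 1%Z else (-1)%Z) (seq (k + 1) (J - k))))))).

Definition WJcol (f : Cplx -> Cplx) (eta Lam : Cplx) (J : nat)
    (i1 : nat) (J1 : list bool) (i2 : nat) (J2 : list bool) (v lam : Cplx) : Cplx :=
  if forallb (fun k => (0 <=? istate i1 J1 J2 k)%Z) (seq 1 (J + 1))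
     && (istate i1 J1 J2 (J + 1) =? Z.of_nat i2)%Z
  then Cprod (map (fun k =>
         W1 f eta (istate i1 J1 J2 k) (ent J1 k) (istate i1 J1 J2 (k + 1)) (ent J2 k)
            (Cadd v (two (Cmul eta (RtoC (INR (k - 1)))))) (Phi eta lam J J1 k) Lam)
         (seq 1 J))
  else Czero.

Fixpoint bool_lists (n : nat) : list (list bool) :=
  match n with
  | O => [[]]
  | S n => map (cons false) (bool_lists n) ++ map (cons true) (bool_lists n)
  end.

Definition ones (l : list bool) : nat := count_occ Bool.bool_dec l true.

(** Fused weight, computed with a given choice K of the outgoing 0/1 sequence
    (|K| = j2); the paper asserts independence of K. *)
Definition WJfused_K (f : Cplx -> Cplx) (eta Lam : Cplx) (J : nat)
    (i1 j1 i2 : nat) (K : list bool) (v lam : Cplx) : Cplx :=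
  Csum (map (fun J1 => WJcol f eta Lam J i1 J1 i2 K v lam)
            (filter (fun l => Nat.eqb (ones l) j1) (bool_lists J))).

From Stdlib Require Import Reals ZArith List Bool Lra Lia Permutation.
Import ListNotations.
Open Scope R_scope.

(* Removing the last site of a column writes the fused weight of [J + 1] sites as a
   combination of two fused weights of [J] sites (last site empty or occupied), with
   [lam] shifted by [-2 eta] or [+2 eta], times an unfused weight at the spectral
   parameter [- eta Lam + 2 eta J].  At this spectral parameter every unfused weight is
   a ratio of products of values of [f], so the closed form can be checked by
   induction on [J]: after cancelling a common factor, the cases with two terms reduce
   to Weierstrass' three-term identity.  That identity holds for every [f] with a
   product formula [f (x + y) f (x - y) = A x B y - B x A y]: for [sin (pi z)] take
   [A = sin^2 (pi .)] and [B = 1]; for theta, regrouping the double series of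
   [theta (x + y) theta (x - y)] by the parity of the sum of the two indices gives
   [A] and [B] as the half-period theta series over even and odd indices. *)

Lemma Cplx_ext (a b : Cplx) : re a = re b -> im a = im b -> a = b.
Proof. destruct a, b; simpl; intros -> ->; reflexivity. Qed.

Ltac Cring := apply Cplx_ext; simpl; ring.

Ltac Cring_num :=
  apply Cplx_ext; unfold two, Csub, Cdiv, ZtoC, RtoC in *;
  cbn [re im Cadd Cmul Copp Cinv Czero Cone];
  repeat first [ rewrite minus_IZR | rewrite plus_IZR | rewrite opp_IZR | rewrite mult_IZR
               | rewrite <- INR_IZR_INZ | rewrite minus_INR by lia | rewrite plus_INR
               | rewrite S_INR ];
  ring.

Lemma Cplx_ring_theory : ring_theory Czero Cone Cadd Cmul Csub Copp (@eq Cplx).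
Proof. constructor; intros; Cring. Qed.

Lemma Cone_neq0 : Cone <> Czero.
Proof. intro H; injection H; lra. Qed.

Lemma Cnorm2_neq0 (p : Cplx) : p <> Czero -> re p * re p + im p * im p <> 0.
Proof.
  destruct p as [a b]; simpl; intros Hp E; apply Hp.
  assert (a = 0) by nra; assert (b = 0) by nra; subst; reflexivity.
Qed.

Lemma Cmul_Cinv_l (p : Cplx) : p <> Czero -> Cmul (Cinv p) p = Cone.
Proof.
  intros Hp; pose proof (Cnorm2_neq0 p Hp).
  destruct p as [a b]; apply Cplx_ext; simpl in *; field; assumption.
Qed.

Lemma Cplx_field_theory :
  field_theory Czero Cone Cadd Cmul Csub Copp Cdiv Cinv (@eq Cplx).
Proof.
  constructor; [exact Cplx_ring_theory | exact Cone_neq0 | reflexivity | exact Cmul_Cinv_l].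
Qed.

Add Field Cfield : Cplx_field_theory.

Lemma Cmul_integral (a b : Cplx) : Cmul a b = Czero -> a = Czero \/ b = Czero.
Proof.
  intros E; destruct (Req_dec (re a * re a + im a * im a) 0) as [Ha | Ha].
  - left; destruct a as [a1 a2]; simpl in Ha.
    assert (a1 = 0) by nra; assert (a2 = 0) by nra; subst; reflexivity.
  - right; assert (Ea : a <> Czero) by (intros ->; apply Ha; simpl; ring).
    replace b with (Cmul (Cinv a) (Cmul a b)) by (field; exact Ea).
    rewrite E; Cring.
Qed.

Lemma Cmul_neq0 (a b : Cplx) : a <> Czero -> b <> Czero -> Cmul a b <> Czero.
Proof. intros Ha Hb E; destruct (Cmul_integral a b E); contradiction. Qed.

Lemma Cpow_neq0 (a : Cplx) (n : nat) : a <> Czero -> Cpow a n <> Czero.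
Proof.
  intros Ha; induction n as [|n IH]; simpl; [exact Cone_neq0 | exact (Cmul_neq0 _ _ Ha IH)].
Qed.

Lemma Cpowz_succ (a : Cplx) (z : Z) : a <> Czero -> Cpowz a (z + 1) = Cmul a (Cpowz a z).
Proof.
  intros Ha; unfold Cpowz.
  destruct (Z.leb_spec 0 z), (Z.leb_spec 0 (z + 1)); try lia.
  - replace (Z.to_nat (z + 1)) with (S (Z.to_nat z)) by lia; reflexivity.
  - replace z with (-1)%Z by lia; simpl; field; exact Ha.
  - replace (Z.to_nat (- z)) with (S (Z.to_nat (- (z + 1)))) by lia; simpl.
    pose proof (Cpow_neq0 a (Z.to_nat (- (z + 1))) Ha); field; split; assumption.
Qed.

Lemma Csum_app (l1 l2 : list Cplx) : Csum (l1 ++ l2) = Cadd (Csum l1) (Csum l2).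
Proof. induction l1 as [|a l1 IH]; simpl; [Cring | rewrite IH; Cring]. Qed.

Lemma Cprod_app (l1 l2 : list Cplx) : Cprod (l1 ++ l2) = Cmul (Cprod l1) (Cprod l2).
Proof. induction l1 as [|a l1 IH]; simpl; [Cring | rewrite IH; Cring]. Qed.

Lemma Csum_perm (l1 l2 : list Cplx) : Permutation l1 l2 -> Csum l1 = Csum l2.
Proof. induction 1; simpl; [reflexivity | congruence | Cring | congruence]. Qed.

Lemma Csum_ext {A : Type} (g h : A -> Cplx) (l : list A) :
  (forall x, In x l -> g x = h x) -> Csum (map g l) = Csum (map h l).
Proof. intros E; f_equal; apply map_ext_in, E. Qed.

Lemma Csum_map_mulr {A : Type} (g : A -> Cplx) (c : Cplx) (l : list A) :
  Csum (map (fun x => Cmul (g x) c) l) = Cmul (Csum (map g l)) c.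
Proof. induction l as [|a l IH]; simpl; [Cring | rewrite IH; Cring]. Qed.

Lemma Csum_map_zero {A : Type} (l : list A) : Csum (map (fun _ => Czero) l) = Czero.
Proof. induction l as [|a l IH]; simpl; [reflexivity | rewrite IH; Cring]. Qed.

Lemma Csum_sub {A : Type} (g h : A -> Cplx) (l : list A) :
  Csub (Csum (map g l)) (Csum (map h l)) = Csum (map (fun x => Csub (g x) (h x)) l).
Proof. induction l as [|a l IH]; simpl; [Cring | rewrite <- IH; Cring]. Qed.

Lemma Csum_filter {A : Type} (g : A -> Cplx) (P : A -> bool) (l : list A) :
  Csum (map g (filter P l)) = Csum (map (fun x => if P x then g x else Czero) l).
Proof.
  induction l as [|a l IH]; simpl; [reflexivity|].
  destruct (P a); simpl; rewrite IH; [reflexivity | Cring].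
Qed.

Lemma Cprod_neq0 (l : list Cplx) : (forall x, In x l -> x <> Czero) -> Cprod l <> Czero.
Proof.
  induction l as [|a l IH]; simpl; intros H; [exact Cone_neq0|].
  apply Cmul_neq0; auto.
Qed.

Lemma Cprod_eq0 (l : list Cplx) : In Czero l -> Cprod l = Czero.
Proof.
  induction l as [|a l IH]; simpl; [contradiction|].
  intros [-> | H]; [|rewrite IH by exact H]; Cring.
Qed.

Lemma filter_perm {A : Type} (p : A -> bool) (l1 l2 : list A) :
  Permutation l1 l2 -> Permutation (filter p l1) (filter p l2).
Proof.
  induction 1; simpl; try (destruct (p x)); try (destruct (p y)); eauto using Permutation, perm_swap.
Qed.

Lemma forallb_ext_in {A : Type} (p q : A -> bool) (l : list A) :
  (forall x, In x l -> p x = q x) -> forallb p l = forallb q l.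
Proof. induction l as [|x l IH]; simpl; intros E; [|rewrite E, IH]; auto. Qed.

Lemma Csum_map_opp {A : Type} (g : A -> Cplx) (l : list A) :
  Csum (map (fun x => Copp (g x)) l) = Copp (Csum (map g l)).
Proof. induction l as [|a l IH]; simpl; [Cring | rewrite IH; ring]. Qed.

Lemma filter_none {A : Type} (p : A -> bool) (l : list A) :
  (forall x, p x = false) -> filter p l = [].
Proof. intros H; induction l as [|x l IH]; simpl; [|rewrite H]; auto. Qed.

(** * Removing the last site of a column *)

Definition snoc (b : bool) (l : list bool) : list bool := l ++ [b].

Definition sgn (a : bool) : Z := if a then 1%Z else (-1)%Z.

Lemma length_bool_lists (n : nat) (l : list bool) : In l (bool_lists n) -> length l = n.
Proof.
  revert l; induction n as [|n IH]; simpl; intros l H.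
  - destruct H as [<- | []]; reflexivity.
  - apply in_app_or in H; destruct H as [H | H]; apply in_map_iff in H;
      destruct H as [l' [<- H]]; simpl; f_equal; auto.
Qed.

Lemma bool_lists_snoc_perm (n : nat) :
  Permutation (bool_lists (S n))
              (map (snoc false) (bool_lists n) ++ map (snoc true) (bool_lists n)).
Proof.
  induction n as [|n IH]; [apply Permutation_refl|].
  change (bool_lists (S (S n))) with
    (map (cons false) (bool_lists (S n)) ++ map (cons true) (bool_lists (S n))).
  eapply Permutation_trans; [apply Permutation_app; apply Permutation_map; exact IH|].
  change (bool_lists (S n)) with
    (map (cons false) (bool_lists n) ++ map (cons true) (bool_lists n)).
  rewrite !map_app, !map_map; unfold snoc; simpl.
  rewrite <- !app_assoc; apply Permutation_app_head.
  rewrite !app_assoc; apply Permutation_app_tail, Permutation_app_comm.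
Qed.

Lemma ones_snoc (b : bool) (l : list bool) : ones (snoc b l) = (ones l + Nat.b2n b)%nat.
Proof. unfold ones, snoc; rewrite count_occ_app; destruct b; simpl; lia. Qed.

Lemma filter_map_snoc (P : list bool -> bool) (b : bool) (L : list (list bool)) :
  filter P (map (snoc b) L) = map (snoc b) (filter (fun l => P (snoc b l)) L).
Proof. induction L as [|l L IH]; simpl; [|destruct (P (snoc b l)); simpl; rewrite IH]; reflexivity. Qed.

Lemma ent_snoc (l : list bool) (a : bool) (k : nat) :
  (1 <= k <= length l)%nat -> ent (l ++ [a]) k = ent l k.
Proof. intros; unfold ent; apply app_nth1; lia. Qed.

Lemma ent_last (l : list bool) (a : bool) : ent (l ++ [a]) (S (length l)) = a.
Proof.
  unfold ent; replace (S (length l) - 1)%nat with (length l) by lia.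
  rewrite app_nth2, Nat.sub_diag by lia; reflexivity.
Qed.

Lemma sum_fold_app (l1 l2 : list Z) :
  fold_right Z.add 0%Z (l1 ++ l2) = (fold_right Z.add 0 l1 + fold_right Z.add 0 l2)%Z.
Proof. induction l1 as [|x l1 IH]; simpl; [reflexivity | rewrite IH; lia]. Qed.

Lemma istate_snoc (i1 : nat) (J1 J2 : list bool) (a b : bool) (k : nat) :
  length J1 = length J2 -> (k <= S (length J1))%nat ->
  istate i1 (J1 ++ [a]) (J2 ++ [b]) k = istate i1 J1 J2 k.
Proof.
  intros; unfold istate; do 2 f_equal; apply map_ext_in; intros m Hm.
  apply in_seq in Hm; rewrite !ent_snoc by lia; reflexivity.
Qed.

Lemma istate_last (i1 : nat) (J1 J2 : list bool) (a b : bool) :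
  length J1 = length J2 ->
  istate i1 (J1 ++ [a]) (J2 ++ [b]) (S (S (length J1))) =
  (istate i1 J1 J2 (S (length J1)) + b2Z a - b2Z b)%Z.
Proof.
  intros HL; unfold istate.
  replace (S (S (length J1)) - 1)%nat with (S (length J1)) by lia.
  replace (S (length J1) - 1)%nat with (length J1) by lia.
  rewrite seq_S, map_app, sum_fold_app; simpl.
  replace (1 + length J1)%nat with (S (length J1)) by lia.
  rewrite ent_last; rewrite HL at 2; rewrite ent_last.
  rewrite (map_ext_in _ (fun m => (b2Z (ent J1 m) - b2Z (ent J2 m))%Z)); [lia|].
  intros m Hm; apply in_seq in Hm; rewrite !ent_snoc by lia; reflexivity.
Qed.

Lemma Phi_snoc (eta lam : Cplx) (J1 : list bool) (a : bool) (k : nat) :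
  (k <= length J1)%nat ->
  Phi eta lam (S (length J1)) (J1 ++ [a]) k =
  Phi eta (Cadd lam (two (Cmul eta (ZtoC (sgn a))))) (length J1) J1 k.
Proof.
  intros Hk; unfold Phi.
  replace (S (length J1) - k)%nat with (S (length J1 - k)) by lia.
  rewrite seq_S, map_app, sum_fold_app.
  replace (k + 1 + (length J1 - k))%nat with (S (length J1)) by lia.
  simpl; rewrite ent_last.
  rewrite (map_ext_in _ (fun m => if ent J1 m then 1%Z else (-1)%Z)).
  - unfold sgn; destruct a; Cring_num.
  - intros m Hm; apply in_seq in Hm; rewrite ent_snoc by lia; reflexivity.
Qed.

Lemma Phi_last (eta lam : Cplx) (J : nat) (J1 : list bool) : Phi eta lam J J1 J = lam.
Proof. unfold Phi; rewrite Nat.sub_diag; simpl; Cring_num. Qed.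

Lemma WJcol_guard_snoc (i1 i2 : nat) (J1 K : list bool) (a b : bool) :
  length J1 = length K ->
  (forallb (fun k => 0 <=? istate i1 (J1 ++ [a]) (K ++ [b]) k) (seq 1 (S (length J1) + 1))
   && (istate i1 (J1 ++ [a]) (K ++ [b]) (S (length J1) + 1) =? Z.of_nat i2))%Z
  = (forallb (fun k => 0 <=? istate i1 J1 K k) (seq 1 (length J1 + 1))
     && (istate i1 J1 K (length J1 + 1) =? Z.of_nat i2 + b2Z b - b2Z a)
     && (0 <=? Z.of_nat i2 + b2Z b - b2Z a))%Z.
Proof.
  intros HL.
  replace (S (length J1) + 1)%nat with (S (S (length J1))) by lia.
  replace (length J1 + 1)%nat with (S (length J1)) by lia.
  rewrite (seq_S (S (length J1))), forallb_app.
  rewrite (forallb_ext_in _ (fun k => 0 <=? istate i1 J1 K k)%Z)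
    by (intros k Hk; apply in_seq in Hk; rewrite istate_snoc by lia; reflexivity).
  replace (1 + S (length J1))%nat with (S (S (length J1))) by lia.
  cbn [forallb]; rewrite istate_last by exact HL.
  set (s := istate i1 J1 K (S (length J1))).
  destruct (forallb (fun k => 0 <=? istate i1 J1 K k)%Z (seq 1 (S (length J1)))) eqn:Hall;
    [|reflexivity].
  assert (Hs : (0 <= s)%Z).
  { apply Z.leb_le; rewrite forallb_forall in Hall; apply Hall, in_seq; lia. }
  destruct (Z.eqb_spec (s + b2Z a - b2Z b) (Z.of_nat i2)),
    (Z.eqb_spec s (Z.of_nat i2 + b2Z b - b2Z a)); lia.
Qed.

Lemma WJcol_prod_snoc (f : Cplx -> Cplx) (eta Lam : Cplx) (i1 : nat) (J1 K : list bool)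
    (a b : bool) (v lam : Cplx) :
  length J1 = length K ->
  Cprod (map (fun k =>
      W1 f eta (istate i1 (J1 ++ [a]) (K ++ [b]) k) (ent (J1 ++ [a]) k)
         (istate i1 (J1 ++ [a]) (K ++ [b]) (k + 1)) (ent (K ++ [b]) k)
         (Cadd v (two (Cmul eta (RtoC (INR (k - 1)))))) (Phi eta lam (S (length J1)) (J1 ++ [a]) k) Lam)
    (seq 1 (S (length J1))))
  = Cmul
      (Cprod (map (fun k =>
         W1 f eta (istate i1 J1 K k) (ent J1 k) (istate i1 J1 K (k + 1)) (ent K k)
            (Cadd v (two (Cmul eta (RtoC (INR (k - 1))))))
            (Phi eta (Cadd lam (two (Cmul eta (ZtoC (sgn a))))) (length J1) J1 k) Lam)
         (seq 1 (length J1))))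
      (W1 f eta (istate i1 J1 K (S (length J1))) a
          (istate i1 J1 K (S (length J1)) + b2Z a - b2Z b)%Z b
          (Cadd v (two (Cmul eta (RtoC (INR (length J1)))))) lam Lam).
Proof.
  intros HL.
  rewrite seq_S, map_app, Cprod_app; simpl map; cbn [Cprod].
  f_equal.
  - f_equal; apply map_ext_in; intros k Hk; apply in_seq in Hk.
    rewrite !istate_snoc, !ent_snoc, Phi_snoc by lia; reflexivity.
  - replace (1 + length J1)%nat with (S (length J1)) by lia.
    replace (S (length J1 + 1)) with (S (S (length J1))) by lia.
    rewrite istate_snoc, istate_last, ent_last, Phi_last by lia.
    replace (ent (K ++ [b]) (S (length J1))) with b by (rewrite HL; symmetry; apply ent_last).
    rewrite Nat.sub_0_r; unfold Cprod, fold_right; ring.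
Qed.

Lemma WJcol_snoc (f : Cplx -> Cplx) (eta Lam : Cplx) (i1 i2 : nat) (J1 K : list bool)
    (a b : bool) (v lam : Cplx) :
  length J1 = length K ->
  WJcol f eta Lam (S (length J1)) i1 (J1 ++ [a]) i2 (K ++ [b]) v lam =
  if (Z.of_nat i2 + b2Z b - b2Z a <? 0)%Z then Czero else
  Cmul (WJcol f eta Lam (length J1) i1 J1 (Z.to_nat (Z.of_nat i2 + b2Z b - b2Z a)) K v
          (Cadd lam (two (Cmul eta (ZtoC (sgn a))))))
       (W1 f eta (Z.of_nat i2 + b2Z b - b2Z a) a (Z.of_nat i2) b
          (Cadd v (two (Cmul eta (RtoC (INR (length J1)))))) lam Lam).
Proof.
  intros HL; unfold WJcol.
  rewrite WJcol_guard_snoc, WJcol_prod_snoc by exact HL.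
  destruct (Z.ltb_spec (Z.of_nat i2 + b2Z b - b2Z a) 0) as [Hneg | Hnn].
  - rewrite (proj2 (Z.leb_gt _ _) Hneg), andb_false_r; reflexivity.
  - rewrite (proj2 (Z.leb_le _ _) Hnn), andb_true_r, Z2Nat.id by exact Hnn.
    replace (length J1 + 1)%nat with (S (length J1)) by lia.
    destruct (_ && _)%bool eqn:Hg; [|Cring].
    apply andb_true_iff in Hg; destruct Hg as [_ Hs]; apply Z.eqb_eq in Hs.
    rewrite Hs; replace (Z.of_nat i2 + b2Z b - b2Z a + b2Z a - b2Z b)%Z with (Z.of_nat i2) by lia.
    reflexivity.
Qed.

Lemma WJfused_snoc_part (f : Cplx -> Cplx) (eta Lam : Cplx) (J i1 j1 i2 : nat) (K : list bool)
    (a b : bool) (v lam : Cplx) :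
  length K = J ->
  Csum (map (fun l => WJcol f eta Lam (S J) i1 (snoc a l) i2 (K ++ [b]) v lam)
            (filter (fun l => Nat.eqb (ones (snoc a l)) j1) (bool_lists J))) =
  if (Z.of_nat i2 + b2Z b - b2Z a <? 0)%Z then Czero else
  Cmul (Csum (map (fun l => WJcol f eta Lam J i1 l (Z.to_nat (Z.of_nat i2 + b2Z b - b2Z a)) K v
                              (Cadd lam (two (Cmul eta (ZtoC (sgn a))))))
                  (filter (fun l => Nat.eqb (ones l + Nat.b2n a) j1) (bool_lists J))))
       (W1 f eta (Z.of_nat i2 + b2Z b - b2Z a) a (Z.of_nat i2) b
          (Cadd v (two (Cmul eta (RtoC (INR J))))) lam Lam).
Proof.
  intros HK.
  rewrite (Csum_ext _ (fun l =>
    if (Z.of_nat i2 + b2Z b - b2Z a <? 0)%Z then Czero else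
    Cmul (WJcol f eta Lam J i1 l (Z.to_nat (Z.of_nat i2 + b2Z b - b2Z a)) K v
            (Cadd lam (two (Cmul eta (ZtoC (sgn a))))))
         (W1 f eta (Z.of_nat i2 + b2Z b - b2Z a) a (Z.of_nat i2) b
            (Cadd v (two (Cmul eta (RtoC (INR J))))) lam Lam))).
  2:{ intros l Hl; apply filter_In, proj1, length_bool_lists in Hl.
      subst J; rewrite <- Hl; apply WJcol_snoc; congruence. }
  destruct (_ <? 0)%Z; [apply Csum_map_zero|].
  rewrite Csum_map_mulr; do 3 f_equal.
  apply filter_ext_in; intros l _; rewrite ones_snoc; reflexivity.
Qed.

Lemma WJfused_snoc (f : Cplx -> Cplx) (eta Lam : Cplx) (J i1 j1 i2 : nat) (K : list bool)
    (b : bool) (v lam : Cplx) :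
  WJfused_K f eta Lam (S J) i1 j1 i2 (K ++ [b]) v lam =
  Cadd (Csum (map (fun l => WJcol f eta Lam (S J) i1 (snoc false l) i2 (K ++ [b]) v lam)
                  (filter (fun l => Nat.eqb (ones (snoc false l)) j1) (bool_lists J))))
       (Csum (map (fun l => WJcol f eta Lam (S J) i1 (snoc true l) i2 (K ++ [b]) v lam)
                  (filter (fun l => Nat.eqb (ones (snoc true l)) j1) (bool_lists J)))).
Proof.
  unfold WJfused_K.
  rewrite (Csum_perm _ _ (Permutation_map _ (filter_perm _ _ _ (bool_lists_snoc_perm J)))).
  rewrite filter_app, map_app, Csum_app, !filter_map_snoc, !map_map; reflexivity.
Qed.

Lemma WJfused_snoc_false (f : Cplx -> Cplx) (eta Lam : Cplx) (J i1 j1 i2 : nat)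
    (K : list bool) (v lam : Cplx) :
  length K = J ->
  WJfused_K f eta Lam (S J) i1 j1 i2 (K ++ [false]) v lam =
  Cadd (Cmul (WJfused_K f eta Lam J i1 j1 i2 K v (Cadd lam (two (Cmul eta (ZtoC (-1))))))
             (W1 f eta (Z.of_nat i2) false (Z.of_nat i2) false
                 (Cadd v (two (Cmul eta (RtoC (INR J))))) lam Lam))
       (match j1, i2 with
        | S j1', S i2' =>
            Cmul (WJfused_K f eta Lam J i1 j1' i2' K v (Cadd lam (two (Cmul eta (ZtoC 1)))))
                 (W1 f eta (Z.of_nat i2') true (Z.of_nat (S i2')) false
                     (Cadd v (two (Cmul eta (RtoC (INR J))))) lam Lam)
        | _, _ => Czero
        end).
Proof.
  intros HK; rewrite WJfused_snoc, !WJfused_snoc_part by exact HK; cbn [b2Z sgn Nat.b2n].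
  unfold WJfused_K; f_equal.
  - rewrite (proj2 (Z.ltb_ge _ _)), Z.sub_0_r, Z.add_0_r, Nat2Z.id by lia.
    do 3 f_equal; apply filter_ext_in; intros l _; rewrite Nat.add_0_r; reflexivity.
  - destruct j1 as [|j1'], i2 as [|i2'].
    + reflexivity.
    + rewrite filter_none by (intros; apply Nat.eqb_neq; lia).
      destruct (_ <? 0)%Z; simpl; ring.
    + rewrite (proj2 (Z.ltb_lt _ _)) by lia; reflexivity.
    + rewrite (proj2 (Z.ltb_ge _ _)) by lia.
      replace (Z.of_nat (S i2') + 0 - 1)%Z with (Z.of_nat i2') by lia; rewrite Nat2Z.id.
      do 3 f_equal; apply filter_ext_in; intros l _.
      apply Bool.eq_iff_eq_true; rewrite !Nat.eqb_eq; lia.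
Qed.

Lemma WJfused_snoc_true (f : Cplx -> Cplx) (eta Lam : Cplx) (J i1 j1 i2 : nat) (K : list bool)
    (v lam : Cplx) :
  length K = J ->
  WJfused_K f eta Lam (S J) i1 j1 i2 (K ++ [true]) v lam =
  Cadd (Cmul (WJfused_K f eta Lam J i1 j1 (S i2) K v (Cadd lam (two (Cmul eta (ZtoC (-1))))))
             (W1 f eta (Z.of_nat (S i2)) false (Z.of_nat i2) true
                 (Cadd v (two (Cmul eta (RtoC (INR J))))) lam Lam))
       (match j1 with
        | S j1' =>
            Cmul (WJfused_K f eta Lam J i1 j1' i2 K v (Cadd lam (two (Cmul eta (ZtoC 1)))))
                 (W1 f eta (Z.of_nat i2) true (Z.of_nat i2) true
                     (Cadd v (two (Cmul eta (RtoC (INR J))))) lam Lam)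
        | O => Czero
        end).
Proof.
  intros HK; rewrite WJfused_snoc, !WJfused_snoc_part by exact HK; cbn [b2Z sgn Nat.b2n].
  rewrite !(proj2 (Z.ltb_ge _ _)) by lia.
  replace (Z.of_nat i2 + 1 - 0)%Z with (Z.of_nat (S i2)) by lia.
  replace (Z.of_nat i2 + 1 - 1)%Z with (Z.of_nat i2) by lia.
  rewrite !Nat2Z.id; unfold WJfused_K; f_equal.
  - do 3 f_equal; apply filter_ext_in; intros l _; rewrite Nat.add_0_r; reflexivity.
  - destruct j1 as [|j1'].
    + rewrite filter_none by (intros; apply Nat.eqb_neq; lia); simpl; ring.
    + do 3 f_equal; apply filter_ext_in; intros l _.
      apply Bool.eq_iff_eq_true; rewrite !Nat.eqb_eq; lia.
Qed.

Lemma WJfused_too_many_ones (f : Cplx -> Cplx) (eta Lam : Cplx) (J i1 j1 i2 : nat)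
    (K : list bool) (v lam : Cplx) :
  (J < j1)%nat -> WJfused_K f eta Lam J i1 j1 i2 K v lam = Czero.
Proof.
  intros Hj; unfold WJfused_K.
  rewrite (filter_ext_in _ (fun _ => false)); [rewrite filter_none; reflexivity..|].
  intros l Hl; apply length_bool_lists in Hl; apply Nat.eqb_neq.
  pose proof (count_occ_bound Bool.bool_dec true l); unfold ones; lia.
Qed.

Definition prod_down (g : Z -> Cplx) (c : Z) (k : nat) : Cplx :=
  Cprod (map (fun m => g (c - Z.of_nat m)%Z) (seq 0 k)).
Definition prod_up (g : Z -> Cplx) (c : Z) (k : nat) : Cplx :=
  Cprod (map (fun m => g (c + Z.of_nat m)%Z) (seq 0 k)).

Lemma map_seq_shift {A : Type} (h : nat -> A) (s k : nat) :
  map h (seq s k) = map (fun m => h (s + m)%nat) (seq 0 k).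
Proof.
  revert h s; induction k as [|k IH]; intros h s; simpl; [reflexivity|].
  rewrite Nat.add_0_r, IH, (IH _ 1%nat); f_equal; apply map_ext; intros; f_equal; lia.
Qed.

Lemma prod_downSl (g : Z -> Cplx) (c c' : Z) (k : nat) :
  c' = (c - 1)%Z -> prod_down g c (S k) = Cmul (g c) (prod_down g c' k).
Proof.
  intros ->; unfold prod_down; simpl; rewrite Z.sub_0_r, (map_seq_shift _ 1).
  do 2 f_equal; apply map_ext; intros m; f_equal; lia.
Qed.

Lemma prod_downSr (g : Z -> Cplx) (c c' : Z) (k : nat) :
  c' = (c - Z.of_nat k)%Z -> prod_down g c (S k) = Cmul (prod_down g c k) (g c').
Proof.
  intros ->; unfold prod_down; rewrite seq_S, map_app, Cprod_app; simpl; f_equal; ring.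
Qed.

Lemma prod_upSl (g : Z -> Cplx) (c c' : Z) (k : nat) :
  c' = (c + 1)%Z -> prod_up g c (S k) = Cmul (g c) (prod_up g c' k).
Proof.
  intros ->; unfold prod_up; simpl; rewrite Z.add_0_r, (map_seq_shift _ 1).
  do 2 f_equal; apply map_ext; intros m; f_equal; lia.
Qed.

Lemma prod_upSr (g : Z -> Cplx) (c c' : Z) (k : nat) :
  c' = (c + Z.of_nat k)%Z -> prod_up g c (S k) = Cmul (prod_up g c k) (g c').
Proof.
  intros ->; unfold prod_up; rewrite seq_S, map_app, Cprod_app; simpl; f_equal; ring.
Qed.

Lemma prod_up_add (g : Z -> Cplx) (c : Z) (a b : nat) :
  prod_up g c (a + b) = Cmul (prod_up g c a) (prod_up g (c + Z.of_nat a)%Z b).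
Proof.
  unfold prod_up; rewrite seq_app, map_app, Cprod_app, (map_seq_shift _ a).
  do 2 f_equal; apply map_ext; intros; f_equal; lia.
Qed.

Lemma prod_down_ext (g h : Z -> Cplx) (c d : Z) (k : nat) :
  (forall m, (0 <= m < Z.of_nat k)%Z -> g (c - m)%Z = h (d - m)%Z) ->
  prod_down g c k = prod_down h d k.
Proof.
  intros E; unfold prod_down; f_equal; apply map_ext_in; intros m Hm.
  apply in_seq in Hm; apply E; lia.
Qed.

Lemma prod_down_neq0 (g : Z -> Cplx) (c : Z) (k : nat) :
  (forall m, (0 <= m < Z.of_nat k)%Z -> g (c - m)%Z <> Czero) -> prod_down g c k <> Czero.
Proof.
  intros H; apply Cprod_neq0; intros x Hx; apply in_map_iff in Hx.
  destruct Hx as [m [<- Hm]]; apply in_seq in Hm; apply H; lia.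
Qed.

Lemma prod_up_neq0 (g : Z -> Cplx) (c : Z) (k : nat) :
  (forall m, (0 <= m < Z.of_nat k)%Z -> g (c + m)%Z <> Czero) -> prod_up g c k <> Czero.
Proof.
  intros H; apply Cprod_neq0; intros x Hx; apply in_map_iff in Hx.
  destruct Hx as [m [<- Hm]]; apply in_seq in Hm; apply H; lia.
Qed.

Lemma prod_down_eq0 (g : Z -> Cplx) (c : Z) (k : nat) (m : Z) :
  (0 <= m < Z.of_nat k)%Z -> g (c - m)%Z = Czero -> prod_down g c k = Czero.
Proof.
  intros Hm E; apply Cprod_eq0, in_map_iff; exists (Z.to_nat m).
  rewrite Z2Nat.id by lia; split; [exact E | apply in_seq; lia].
Qed.

Lemma prod_down_0 (g : Z -> Cplx) (c : Z) : prod_down g c 0 = Cone.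
Proof. reflexivity. Qed.

Lemma prod_up_0 (g : Z -> Cplx) (c : Z) : prod_up g c 0 = Cone.
Proof. reflexivity. Qed.

Lemma prod_up_transfer (g : Z -> Cplx) (i1 i2 a b : nat) :
  (i1 + a = i2 + b)%nat -> prod_up g 0 i2 <> Czero ->
  prod_up g (Z.of_nat i2) b
  = Cdiv (Cmul (prod_up g 0 i1) (prod_up g (Z.of_nat i1) a)) (prod_up g 0 i2).
Proof.
  intros E Hnz.
  assert (Hsplit : Cmul (prod_up g 0 i1) (prod_up g (Z.of_nat i1) a)
                   = Cmul (prod_up g 0 i2) (prod_up g (Z.of_nat i2) b))
    by (rewrite <- (Z.add_0_l (Z.of_nat i1)), <- (Z.add_0_l (Z.of_nat i2)), <- !prod_up_add, E;
        reflexivity).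
  rewrite Hsplit; field; exact Hnz.
Qed.

(** * Functions with a product formula *)

Section ProductFormula.

Variables f A B : Cplx -> Cplx.
Hypothesis f_prod :
  forall x y, Cmul (f (Cadd x y)) (f (Csub x y)) = Csub (Cmul (A x) (B y)) (Cmul (B x) (A y)).

Lemma f_zero : f Czero = Czero.
Proof.
  pose proof (f_prod Czero Czero) as H.
  replace (Cadd Czero Czero) with Czero in H by Cring.
  replace (Csub Czero Czero) with Czero in H by Cring.
  replace (Csub _ _) with Czero in H by ring.
  destruct (Cmul_integral _ _ H); assumption.
Qed.

Lemma f_odd (z : Cplx) : f (Copp z) = Copp (f z).
Proof.
  assert (Hsq : forall w, Cmul (f w) (f (Copp w)) = Copp (Cmul (f w) (f w))).
  { intros w; pose proof (f_prod Czero w) as H1; pose proof (f_prod w Czero) as H2.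
    replace (Cadd Czero w) with w in H1 by Cring; replace (Csub Czero w) with (Copp w) in H1 by Cring.
    replace (Cadd w Czero) with w in H2 by Cring; replace (Csub w Czero) with w in H2 by Cring.
    rewrite H1, H2; ring. }
  pose proof (Hsq (Copp z)) as Hsq'; replace (Copp (Copp z)) with z in Hsq' by Cring.
  assert (Hs : Cmul (Cadd (f z) (f (Copp z))) (Cadd (f z) (f (Copp z))) = Czero).
  { transitivity (Cadd (Cadd (Cmul (f z) (f (Copp z))) (Cmul (f (Copp z)) (f z)))
                       (Cadd (Cmul (f z) (f z)) (Cmul (f (Copp z)) (f (Copp z))))); [ring|].
    rewrite Hsq, Hsq'; ring. }
  destruct (Cmul_integral _ _ Hs) as [E | E];
    replace (f (Copp z)) with (Csub (Cadd (f z) (f (Copp z))) (f z)) by ring; rewrite E; ring.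
Qed.

Lemma weierstrass (x y u v : Cplx) :
  Cmul (Cmul (f (Cadd x y)) (f (Csub x y))) (Cmul (f (Cadd u v)) (f (Csub u v))) =
  Csub (Cmul (Cmul (f (Cadd x u)) (f (Csub x u))) (Cmul (f (Cadd y v)) (f (Csub y v))))
       (Cmul (Cmul (f (Cadd x v)) (f (Csub x v))) (Cmul (f (Cadd y u)) (f (Csub y u)))).
Proof. rewrite !f_prod; ring. Qed.

End ProductFormula.

(** * The closed form and its recursion *)

Section ClosedForm.

Variables f A B : Cplx -> Cplx.
Hypothesis f_prod :
  forall x y, Cmul (f (Cadd x y)) (f (Csub x y)) = Csub (Cmul (A x) (B y)) (Cmul (B x) (A y)).
Variables eta Lam : Cplx.

Definition Feta (c : Z) : Cplx := f (Cmul (two eta) (ZtoC c)).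
Definition FLam (c : Z) : Cplx := f (Csub (Cmul (two eta) Lam) (Cmul (two eta) (ZtoC c))).
Definition Flam (lam : Cplx) (c : Z) : Cplx := f (Cadd lam (Cmul (two eta) (ZtoC c))).
Definition FlamLam (lam : Cplx) (c : Z) : Cplx :=
  f (Csub (Cadd lam (Cmul (two eta) (ZtoC c))) (Cmul (two eta) Lam)).

Lemma Feta_0 : Feta 0 = Czero.
Proof. unfold Feta; rewrite <- (f_zero f A B f_prod); f_equal; Cring_num. Qed.

Lemma Flam_shift (lam : Cplx) (s c : Z) :
  Flam (Cadd lam (two (Cmul eta (ZtoC s)))) c = Flam lam (c + s)%Z.
Proof. unfold Flam; f_equal; Cring_num. Qed.

Lemma prod_down_Flam_shift (lam : Cplx) (s c : Z) (k : nat) :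
  prod_down (Flam (Cadd lam (two (Cmul eta (ZtoC s))))) c k = prod_down (Flam lam) (c + s)%Z k.
Proof. apply prod_down_ext; intros m _; rewrite Flam_shift; f_equal; lia. Qed.

Lemma prod_down_FlamLam_shift (lam : Cplx) (s c : Z) (k : nat) :
  prod_down (FlamLam (Cadd lam (two (Cmul eta (ZtoC s))))) c k
  = prod_down (FlamLam lam) (c + s)%Z k.
Proof.
  apply prod_down_ext; intros m _; unfold FlamLam; f_equal; Cring_num.
Qed.

(* The elliptic binomial [N]! / ([j]! [N-j]!) with [n]! = [2 eta n]_n. *)
Definition ebinom (N j : nat) : Cplx :=
  Cdiv (prod_down Feta (Z.of_nat N) N)
       (Cmul (prod_down Feta (Z.of_nat j) j) (prod_down Feta (Z.of_nat (N - j)) (N - j))).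

(* The right-hand side of the theorem, with [N] sites and with every Pochhammer
   symbol written as a product of values of [f] on a progression of step [2 eta]. *)
Definition closed_weight (N i1 j1 i2 j2 : nat) (lam : Cplx) : Cplx :=
  Cmul (Cpowz (Feta 1) (Z.of_nat i2 - Z.of_nat i1))
  (Cmul (ebinom N j1)
  (Cmul (prod_down Feta (Z.of_nat i1) j2)
  (Cmul (Cdiv (prod_up FLam (Z.of_nat i2) (N - j1)) (prod_up FLam 0 N))
  (Cdiv (Cmul (prod_down (Flam lam) (Z.of_nat i2) (N - j1))
              (prod_down (FlamLam lam) (Z.of_nat i2 + Z.of_nat j1 - 1) j1))
        (Cmul (prod_down (Flam lam) (Z.of_nat j1) (N - j1))
              (prod_down (Flam lam) (2 * Z.of_nat j1 - Z.of_nat N - 1) j1)))))).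

Lemma closed_weight_empty (i : nat) (lam : Cplx) : closed_weight 0 i 0 i 0 lam = Cone.
Proof.
  unfold closed_weight, ebinom, Cpowz; rewrite Z.sub_diag; simpl.
  rewrite !prod_down_0, !prod_up_0; field; exact Cone_neq0.
Qed.

Lemma closed_weight_eq0 (N i1 j1 i2 j2 : nat) (lam : Cplx) :
  (i1 < j2)%nat -> closed_weight N i1 j1 i2 j2 lam = Czero.
Proof.
  intros H; unfold closed_weight.
  rewrite (prod_down_eq0 Feta (Z.of_nat i1) j2 (Z.of_nat i1)); [ring | lia |].
  rewrite Z.sub_diag; exact Feta_0.
Qed.

(* The spectral parameter [v + 2 eta J] of site [J + 1] of a column, at [v = - eta Lam]. *)
Definition vcol (J : nat) : Cplx := Cadd (Copp (Cmul eta Lam)) (two (Cmul eta (RtoC (INR J)))).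

Lemma W1_00 (J : nat) (k : Z) (lam : Cplx) : (0 <= k)%Z ->
  W1 f eta k false k false (vcol J) lam Lam =
  Cdiv (Cmul (FLam (k + Z.of_nat J)) (Flam lam k)) (Cmul (FLam (Z.of_nat J)) (Flam lam 0)).
Proof.
  intros Hk; unfold W1; rewrite (proj2 (Z.leb_le _ _) Hk), Z.eqb_refl.
  unfold vcol, FLam, Flam; do 3 f_equal; Cring_num.
Qed.

Lemma W1_10 (J : nat) (k k' : Z) (lam : Cplx) : (0 <= k)%Z -> k' = (k + 1)%Z ->
  W1 f eta k true k' false (vcol J) lam Lam =
  Cdiv (Cmul (FlamLam lam (k + 1 + Z.of_nat J)) (Feta 1)) (Cmul (FLam (Z.of_nat J)) (Flam lam 0)).
Proof.
  intros Hk ->; unfold W1; rewrite (proj2 (Z.leb_le _ _) Hk), Z.eqb_refl.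
  unfold vcol, FLam, Flam, FlamLam, Feta; do 3 f_equal; Cring_num.
Qed.

Lemma W1_01 (J : nat) (k k' : Z) (lam : Cplx) : (1 <= k)%Z -> k' = (k - 1)%Z ->
  W1 f eta k false k' true (vcol J) lam Lam =
  Cdiv (Cmul (Cmul (Flam lam (k - 1 - Z.of_nat J)) (FLam (k - 1))) (Feta k))
       (Cmul (Cmul (FLam (Z.of_nat J)) (Flam lam 0)) (Feta 1)).
Proof.
  intros Hk ->; unfold W1.
  rewrite (proj2 (Z.leb_le 0 k)), Z.eqb_refl, (proj2 (Z.leb_le 1 k)) by lia; simpl.
  unfold vcol, FLam, Flam, Feta; do 3 f_equal; try f_equal; Cring_num.
Qed.

Lemma W1_11 (J : nat) (k : Z) (lam : Cplx) : (0 <= k)%Z ->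
  W1 f eta k true k true (vcol J) lam Lam =
  Cdiv (Cmul (Feta (k - Z.of_nat J)) (FlamLam lam k)) (Cmul (FLam (Z.of_nat J)) (Flam lam 0)).
Proof.
  intros Hk; unfold W1; rewrite (proj2 (Z.leb_le _ _) Hk), Z.eqb_refl.
  unfold vcol, FLam, Flam, FlamLam, Feta; do 3 f_equal; Cring_num.
Qed.

Ltac f_atom :=
  repeat match goal with x := _ |- _ => subst x end;
  unfold Feta, FLam, Flam, FlamLam;
  first [ f_equal; Cring_num | rewrite <- (f_odd f A B f_prod); f_equal; Cring_num ].

Lemma recursion_identity_true (N j1 i2 : Z) (lam : Cplx) :
  Cmul (Cmul (Feta N) (Feta (i2 - j1 + 1))) (Cmul (Flam lam (i2 + j1 - N + 1)) (Flam lam 0)) =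
  Cadd (Cmul (Cmul (Feta (N - j1)) (Feta (i2 + 1))) (Cmul (Flam lam j1) (Flam lam (i2 - N + 1))))
       (Cmul (Cmul (Feta j1) (Feta (i2 - N + 1))) (Cmul (Flam lam (i2 + 1)) (Flam lam (j1 - N)))).
Proof.
  pose (x := Cmul eta (ZtoC (N + i2 - j1 + 1))).
  pose (y := Cmul eta (ZtoC (N - i2 + j1 - 1))).
  pose (u := Cadd lam (Cmul eta (ZtoC (i2 + j1 - N + 1)))).
  pose (v := Cmul eta (ZtoC (i2 + j1 - N + 1))).
  pose proof (weierstrass f A B f_prod x y u v) as H.
  replace (f (Cadd x y)) with (Feta N) in H by f_atom.
  replace (f (Csub x y)) with (Feta (i2 - j1 + 1)) in H by f_atom.
  replace (f (Cadd u v)) with (Flam lam (i2 + j1 - N + 1)) in H by f_atom.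
  replace (f (Csub u v)) with (Flam lam 0) in H by f_atom.
  replace (f (Cadd x u)) with (Flam lam (i2 + 1)) in H by f_atom.
  replace (f (Csub x u)) with (Copp (Flam lam (j1 - N))) in H by f_atom.
  replace (f (Cadd y v)) with (Feta j1) in H by f_atom.
  replace (f (Csub y v)) with (Copp (Feta (i2 - N + 1))) in H by f_atom.
  replace (f (Cadd x v)) with (Feta (i2 + 1)) in H by f_atom.
  replace (f (Csub x v)) with (Feta (N - j1)) in H by f_atom.
  replace (f (Cadd y u)) with (Flam lam j1) in H by f_atom.
  replace (f (Csub y u)) with (Copp (Flam lam (i2 - N + 1))) in H by f_atom.
  rewrite H; ring.
Qed.

Lemma recursion_identity_false (N j1 i2 : Z) (lam : Cplx) :
  Cmul (Cmul (Feta N) (FLam (i2 + N - 1 - j1))) (Cmul (FlamLam lam (i2 + j1 - 1)) (Flam lam 0)) =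
  Cadd (Cmul (Cmul (Feta (N - j1)) (FLam (i2 + N - 1))) (Cmul (FlamLam lam (i2 - 1)) (Flam lam j1)))
       (Cmul (Cmul (Feta j1) (FLam (i2 - 1))) (Cmul (Flam lam (j1 - N)) (FlamLam lam (i2 + N - 1)))).
Proof.
  pose (x := Cmul eta (Cadd Lam (ZtoC (1 - i2 + j1)))).
  pose (y := Cmul eta (Csub (ZtoC (2 * N - 1 + i2 - j1)) Lam)).
  pose (u := Cadd lam (Cmul eta (Csub (ZtoC (i2 + j1 - 1)) Lam))).
  pose (v := Cmul eta (Csub (ZtoC (i2 + j1 - 1)) Lam)).
  pose proof (weierstrass f A B f_prod x y u v) as H.
  replace (f (Cadd x y)) with (Feta N) in H by f_atom.
  replace (f (Csub x y)) with (FLam (i2 + N - 1 - j1)) in H by f_atom.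
  replace (f (Cadd u v)) with (FlamLam lam (i2 + j1 - 1)) in H by f_atom.
  replace (f (Csub u v)) with (Flam lam 0) in H by f_atom.
  replace (f (Cadd x u)) with (Flam lam j1) in H by f_atom.
  replace (f (Csub x u)) with (Copp (FlamLam lam (i2 - 1))) in H by f_atom.
  replace (f (Cadd y v)) with (Copp (FLam (i2 + N - 1))) in H by f_atom.
  replace (f (Csub y v)) with (Feta (N - j1)) in H by f_atom.
  replace (f (Cadd x v)) with (Feta j1) in H by f_atom.
  replace (f (Csub x v)) with (FLam (i2 - 1)) in H by f_atom.
  replace (f (Cadd y u)) with (FlamLam lam (i2 + N - 1)) in H by f_atom.
  replace (f (Csub y u)) with (Copp (Flam lam (j1 - N))) in H by f_atom.
  rewrite H; ring.
Qed.

Definition nondegenerate (N : nat) (lam : Cplx) : Prop :=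
  (forall c, (1 <= c <= Z.of_nat N)%Z -> Feta c <> Czero) /\
  (forall c, (0 <= c < Z.of_nat N)%Z -> FLam c <> Czero) /\
  (forall c, (- Z.of_nat N <= c <= Z.of_nat N)%Z -> Flam lam c <> Czero).

Definition closed_or_zero (N i1 j1 i2 j2 : nat) (lam : Cplx) : Cplx :=
  if (j1 <=? N)%nat then closed_weight N i1 j1 i2 j2 lam else Czero.

(* Identifies atoms whose integer arguments agree up to [lia], so that [field]
   sees them as the same variable. *)
Ltac unify1 :=
  match goal with
  | |- context [Feta ?a] => match goal with |- context [Feta ?b] =>
      assert_fails (constr_eq a b); replace (Feta b) with (Feta a) by (f_equal; lia) end
  | |- context [FLam ?a] => match goal with |- context [FLam ?b] =>
      assert_fails (constr_eq a b); replace (FLam b) with (FLam a) by (f_equal; lia) end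
  | |- context [Flam ?l ?a] => match goal with |- context [Flam l ?b] =>
      assert_fails (constr_eq a b); replace (Flam l b) with (Flam l a) by (f_equal; lia) end
  | |- context [FlamLam ?l ?a] => match goal with |- context [FlamLam l ?b] =>
      assert_fails (constr_eq a b); replace (FlamLam l b) with (FlamLam l a) by (f_equal; lia) end
  | |- context [prod_down ?g ?a ?k] => match goal with |- context [prod_down g ?b ?k'] =>
      assert_fails (constr_eq a b); replace (prod_down g b k') with (prod_down g a k) by (f_equal; lia) end
  | |- context [prod_up ?g ?a ?k] => match goal with |- context [prod_up g ?b ?k'] =>
      assert_fails (constr_eq a b); replace (prod_up g b k') with (prod_up g a k) by (f_equal; lia) end
  | |- context [Cpowz ?g ?a] => match goal with |- context [Cpowz g ?b] =>
      assert_fails (constr_eq a b); replace (Cpowz g b) with (Cpowz g a) by (f_equal; lia) end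
  end.
Ltac unify_atoms := repeat unify1.

Section Step.

Variable J : nat.
Variable lam : Cplx.
Hypothesis HFeta : forall c, (1 <= c <= Z.of_nat (S J))%Z -> Feta c <> Czero.
Hypothesis HFLam : forall c, (0 <= c < Z.of_nat (S J))%Z -> FLam c <> Czero.
Hypothesis HFlam : forall c, (- Z.of_nat (S J) <= c <= Z.of_nat (S J))%Z -> Flam lam c <> Czero.

Let lam_dn := Cadd lam (two (Cmul eta (ZtoC (-1)))).
Let lam_up := Cadd lam (two (Cmul eta (ZtoC 1))).

Ltac nz := first
  [ apply HFeta; lia | apply HFLam; lia | apply HFlam; lia
  | apply prod_down_neq0; intros; first [apply HFeta; lia | apply HFLam; lia | apply HFlam; lia]
  | apply prod_up_neq0; intros; first [apply HFeta; lia | apply HFLam; lia | apply HFlam; lia] ].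

Ltac peel_start :=
  unfold closed_weight, ebinom, lam_dn, lam_up;
  rewrite ?prod_down_Flam_shift, ?prod_down_FlamLam_shift.

Ltac peel_finish := unify_atoms; field; repeat split; nz.

Lemma closed_rec_00 (i1 i2 j2 : nat) :
  Cmul (closed_weight J i1 0 i2 j2 lam_dn)
       (W1 f eta (Z.of_nat i2) false (Z.of_nat i2) false (vcol J) lam Lam)
  = closed_weight (S J) i1 0 i2 j2 lam.
Proof.
  rewrite W1_00 by lia; peel_start.
  rewrite !Nat.sub_0_r.
  rewrite (prod_upSr FLam (Z.of_nat i2) (Z.of_nat i2 + Z.of_nat J) J) by lia.
  rewrite (prod_upSr FLam 0 (Z.of_nat J) J) by lia.
  rewrite (prod_downSl (Flam lam) (Z.of_nat i2) (Z.of_nat i2 - 1) J) by lia.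
  rewrite (prod_downSl (Flam lam) (Z.of_nat 0) (-1) J) by lia.
  rewrite !prod_down_0; peel_finish.
Qed.

Lemma closed_rec_10 (i1 i2 j2 : nat) :
  Cmul (closed_weight J i1 J i2 j2 lam_up)
       (W1 f eta (Z.of_nat i2) true (Z.of_nat (S i2)) false (vcol J) lam Lam)
  = closed_weight (S J) i1 (S J) (S i2) j2 lam.
Proof.
  rewrite (W1_10 J (Z.of_nat i2)) by lia; peel_start.
  rewrite !Nat.sub_diag, !prod_down_0, !prod_up_0.
  rewrite (prod_upSr FLam 0 (Z.of_nat J) J) by lia.
  rewrite (prod_downSl (FlamLam lam) (Z.of_nat (S i2) + Z.of_nat (S J) - 1)
                       (Z.of_nat i2 + Z.of_nat J) J) by lia.
  rewrite (prod_downSr (Flam lam) (2 * Z.of_nat (S J) - Z.of_nat (S J) - 1) 0 J) by lia.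
  replace (Z.of_nat (S i2) - Z.of_nat i1)%Z with ((Z.of_nat i2 - Z.of_nat i1) + 1)%Z by lia.
  rewrite Cpowz_succ by (apply HFeta; lia); peel_finish.
Qed.

Lemma closed_rec_01 (i1 i2 j2 : nat) : (i1 = i2 + S j2)%nat ->
  Cmul (closed_weight J i1 0 (S i2) j2 lam_dn)
       (W1 f eta (Z.of_nat (S i2)) false (Z.of_nat i2) true (vcol J) lam Lam)
  = closed_weight (S J) i1 0 i2 (S j2) lam.
Proof.
  intros Hc; rewrite W1_01 by lia; peel_start.
  rewrite !Nat.sub_0_r.
  rewrite (prod_downSr Feta (Z.of_nat i1) (Z.of_nat i1 - Z.of_nat j2) j2) by lia.
  rewrite (prod_upSl FLam (Z.of_nat i2) (Z.of_nat (S i2)) J) by lia.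
  rewrite (prod_upSr FLam 0 (Z.of_nat J) J) by lia.
  rewrite (prod_downSr (Flam lam) (Z.of_nat i2) (Z.of_nat i2 - Z.of_nat J) J) by lia.
  rewrite (prod_downSl (Flam lam) (Z.of_nat 0) (-1) J) by lia.
  rewrite !prod_down_0.
  replace (Z.of_nat (S i2) - Z.of_nat i1)%Z with ((Z.of_nat i2 - Z.of_nat i1) + 1)%Z by lia.
  rewrite Cpowz_succ by (apply HFeta; lia); peel_finish.
Qed.

Lemma closed_rec_11 (i1 i2 j2 : nat) : (i1 + S J = i2 + S j2)%nat ->
  Cmul (closed_weight J i1 J i2 j2 lam_up)
       (W1 f eta (Z.of_nat i2) true (Z.of_nat i2) true (vcol J) lam Lam)
  = closed_weight (S J) i1 (S J) i2 (S j2) lam.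
Proof.
  intros Hc; rewrite W1_11 by lia; peel_start.
  rewrite !Nat.sub_diag, !prod_down_0, !prod_up_0.
  rewrite (prod_downSr Feta (Z.of_nat i1) (Z.of_nat i1 - Z.of_nat j2) j2) by lia.
  rewrite (prod_upSr FLam 0 (Z.of_nat J) J) by lia.
  rewrite (prod_downSr (FlamLam lam) (Z.of_nat i2 + Z.of_nat (S J) - 1) (Z.of_nat i2) J) by lia.
  rewrite (prod_downSr (Flam lam) (2 * Z.of_nat (S J) - Z.of_nat (S J) - 1) 0 J) by lia.
  peel_finish.
Qed.

(* In the two-term cases both sides are divided by the common factor [X], which
   leaves exactly the instance of [recursion_identity_*]. *)
Lemma closed_rec_x0 (j1 d i1 i2 j2 : nat) :
  J = S (j1 + d) -> (i1 + S j1 = S i2 + j2)%nat ->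
  Cadd (Cmul (closed_weight J i1 (S j1) (S i2) j2 lam_dn)
             (W1 f eta (Z.of_nat (S i2)) false (Z.of_nat (S i2)) false (vcol J) lam Lam))
       (Cmul (closed_weight J i1 j1 i2 j2 lam_up)
             (W1 f eta (Z.of_nat i2) true (Z.of_nat (S i2)) false (vcol J) lam Lam))
  = closed_weight (S J) i1 (S j1) (S i2) j2 lam.
Proof.
  intros HJ Hc.
  rewrite W1_00, (W1_10 J (Z.of_nat i2)) by lia; peel_start.
  replace (S J - S j1)%nat with (S d) by lia.
  replace (J - S j1)%nat with d by lia.
  replace (J - j1)%nat with (S d) by lia.
  rewrite (prod_downSl Feta (Z.of_nat (S J)) (Z.of_nat J) J) by lia.
  rewrite (prod_downSl Feta (Z.of_nat (S j1)) (Z.of_nat j1) j1) by lia.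
  rewrite (prod_downSl Feta (Z.of_nat (S d)) (Z.of_nat d) d) by lia.
  rewrite (prod_upSr FLam (Z.of_nat (S i2)) (Z.of_nat (S i2) + Z.of_nat d) d) by lia.
  rewrite (prod_upSr FLam 0 (Z.of_nat J) J) by lia.
  rewrite (prod_downSl (Flam lam) (Z.of_nat (S i2)) (Z.of_nat i2) d) by lia.
  rewrite (prod_downSl (FlamLam lam) (Z.of_nat (S i2) + Z.of_nat (S j1) - 1)
                       (Z.of_nat i2 + Z.of_nat j1) j1) by lia.
  rewrite (prod_downSl (Flam lam) (Z.of_nat (S j1)) (Z.of_nat j1) d) by lia.
  rewrite (prod_downSr (Flam lam) (2 * Z.of_nat (S j1) - Z.of_nat (S J) - 1)
                       (Z.of_nat (S j1) - Z.of_nat (S J)) j1) by lia.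
  rewrite (prod_downSr (FlamLam lam) (Z.of_nat (S i2) + Z.of_nat (S j1) - 1 + -1) (Z.of_nat i2) j1) by lia.
  rewrite (prod_downSr (Flam lam) (2 * Z.of_nat (S j1) - Z.of_nat J - 1 + -1)
                       (Z.of_nat (S j1) - Z.of_nat (S J)) j1) by lia.
  rewrite (prod_upSl FLam (Z.of_nat i2) (Z.of_nat (S i2)) d) by lia.
  rewrite (prod_downSl (Flam lam) (Z.of_nat i2 + 1) (Z.of_nat i2) d) by lia.
  rewrite (prod_downSl (Flam lam) (Z.of_nat j1 + 1) (Z.of_nat j1) d) by lia.
  replace (Z.of_nat (S i2) - Z.of_nat i1)%Z with ((Z.of_nat i2 - Z.of_nat i1) + 1)%Z by lia.
  rewrite Cpowz_succ by (apply HFeta; lia).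
  pose proof (recursion_identity_false (Z.of_nat (S J)) (Z.of_nat (S j1)) (Z.of_nat (S i2)) lam) as T.
  set (X := Cdiv
    (Cmul (Cmul (Cmul (Feta 1) (Cpowz (Feta 1) (Z.of_nat i2 - Z.of_nat i1)))
                (Cmul (prod_down Feta (Z.of_nat J) J) (prod_down Feta (Z.of_nat i1) j2)))
          (Cmul (Cmul (prod_up FLam (Z.of_nat (S i2)) d) (prod_down (Flam lam) (Z.of_nat i2) d))
                (Cmul (prod_down (FlamLam lam) (Z.of_nat i2 + Z.of_nat j1) j1) (Flam lam (Z.of_nat (S i2))))))
    (Cmul (Cmul (Cmul (prod_down Feta (Z.of_nat j1) j1) (prod_down Feta (Z.of_nat d) d))
                (Cmul (prod_up FLam 0 J) (prod_down (Flam lam) (Z.of_nat j1) d)))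
          (Cmul (Cmul (prod_down (Flam lam) (2 * Z.of_nat j1 - Z.of_nat J) j1) (Feta (Z.of_nat (S j1))))
                (Cmul (Cmul (Feta (Z.of_nat (S d))) (FLam (Z.of_nat J)))
                      (Cmul (Flam lam (Z.of_nat (S j1)))
                            (Cmul (Flam lam (Z.of_nat (S j1) - Z.of_nat (S J))) (Flam lam 0))))))).
  match type of T with ?L = _ => transitivity (Cmul X L) end.
  - rewrite T; unfold X; peel_finish.
  - unfold X; peel_finish.
Qed.

Lemma closed_rec_x1 (j1 d i1 i2 j2 : nat) :
  J = S (j1 + d) -> (i1 + S j1 = i2 + S j2)%nat ->
  Cadd (Cmul (closed_weight J i1 (S j1) (S i2) j2 lam_dn)
             (W1 f eta (Z.of_nat (S i2)) false (Z.of_nat i2) true (vcol J) lam Lam))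
       (Cmul (closed_weight J i1 j1 i2 j2 lam_up)
             (W1 f eta (Z.of_nat i2) true (Z.of_nat i2) true (vcol J) lam Lam))
  = closed_weight (S J) i1 (S j1) i2 (S j2) lam.
Proof.
  intros HJ Hc.
  rewrite W1_01, W1_11 by lia; peel_start.
  replace (S J - S j1)%nat with (S d) by lia.
  replace (J - S j1)%nat with d by lia.
  replace (J - j1)%nat with (S d) by lia.
  rewrite (prod_downSl Feta (Z.of_nat (S J)) (Z.of_nat J) J) by lia.
  rewrite (prod_downSl Feta (Z.of_nat (S j1)) (Z.of_nat j1) j1) by lia.
  rewrite (prod_downSl Feta (Z.of_nat (S d)) (Z.of_nat d) d) by lia.
  rewrite (prod_downSr Feta (Z.of_nat i1) (Z.of_nat i1 - Z.of_nat j2) j2) by lia.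
  rewrite (prod_upSl FLam (Z.of_nat i2) (Z.of_nat (S i2)) d) by lia.
  rewrite (prod_upSr FLam 0 (Z.of_nat J) J) by lia.
  rewrite (prod_downSr (Flam lam) (Z.of_nat i2) (Z.of_nat i2 - Z.of_nat d) d) by lia.
  rewrite (prod_downSr (FlamLam lam) (Z.of_nat i2 + Z.of_nat (S j1) - 1) (Z.of_nat i2) j1) by lia.
  rewrite (prod_downSl (Flam lam) (Z.of_nat (S j1)) (Z.of_nat j1) d) by lia.
  rewrite (prod_downSr (Flam lam) (2 * Z.of_nat (S j1) - Z.of_nat (S J) - 1)
                       (Z.of_nat (S j1) - Z.of_nat (S J)) j1) by lia.
  rewrite (prod_downSr (FlamLam lam) (Z.of_nat (S i2) + Z.of_nat (S j1) - 1 + -1) (Z.of_nat i2) j1) by lia.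
  rewrite (prod_downSr (Flam lam) (2 * Z.of_nat (S j1) - Z.of_nat J - 1 + -1)
                       (Z.of_nat (S j1) - Z.of_nat (S J)) j1) by lia.
  replace (Z.of_nat (S i2) - Z.of_nat i1)%Z with ((Z.of_nat i2 - Z.of_nat i1) + 1)%Z by lia.
  rewrite Cpowz_succ by (apply HFeta; lia).
  rewrite (prod_downSl (Flam lam) (Z.of_nat i2 + 1) (Z.of_nat i2) d) by lia.
  rewrite (prod_downSl (Flam lam) (Z.of_nat j1 + 1) (Z.of_nat j1) d) by lia.
  pose proof (recursion_identity_true (Z.of_nat (S J)) (Z.of_nat (S j1)) (Z.of_nat i2) lam) as T.
  set (X := Cdiv
    (Cmul (Cmul (Cpowz (Feta 1) (Z.of_nat i2 - Z.of_nat i1))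
                (Cmul (prod_down Feta (Z.of_nat J) J) (prod_down Feta (Z.of_nat i1) j2)))
          (Cmul (Cmul (FLam (Z.of_nat i2)) (prod_up FLam (Z.of_nat (S i2)) d))
                (Cmul (Cmul (prod_down (Flam lam) (Z.of_nat i2) d)
                            (prod_down (FlamLam lam) (Z.of_nat i2 + Z.of_nat (S j1) - 1) j1))
                      (FlamLam lam (Z.of_nat i2)))))
    (Cmul (Cmul (Cmul (Feta (Z.of_nat (S j1))) (prod_down Feta (Z.of_nat j1) j1))
                (Cmul (Feta (Z.of_nat (S d))) (prod_down Feta (Z.of_nat d) d)))
          (Cmul (Cmul (prod_up FLam 0 J) (FLam (Z.of_nat J)))
                (Cmul (Cmul (Flam lam (Z.of_nat (S j1))) (prod_down (Flam lam) (Z.of_nat j1) d))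
                      (Cmul (prod_down (Flam lam) (2 * Z.of_nat (S j1) - Z.of_nat (S J) - 1) j1)
                            (Cmul (Flam lam (Z.of_nat (S j1) - Z.of_nat (S J))) (Flam lam 0))))))).
  match type of T with ?L = _ => transitivity (Cmul X L) end.
  - rewrite T; unfold X; peel_finish.
  - unfold X; peel_finish.
Qed.

Lemma closed_recursion_false (i1 j1 i2 j2 : nat) :
  (j1 <= S J)%nat -> (i1 + j1 = i2 + j2)%nat ->
  Cadd (Cmul (closed_or_zero J i1 j1 i2 j2 lam_dn)
             (W1 f eta (Z.of_nat i2) false (Z.of_nat i2) false (vcol J) lam Lam))
       (match j1, i2 with
        | S j1', S i2' =>
            Cmul (closed_or_zero J i1 j1' i2' j2 lam_up)
                 (W1 f eta (Z.of_nat i2') true (Z.of_nat (S i2')) false (vcol J) lam Lam)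
        | _, _ => Czero
        end)
  = closed_weight (S J) i1 j1 i2 j2 lam.
Proof.
  intros Hj1 Hc; unfold closed_or_zero.
  destruct (Nat.lt_ge_cases i1 j2) as [Hz | Hle].
  { rewrite !closed_weight_eq0 by exact Hz.
    destruct j1, i2; repeat destruct (_ <=? J)%nat; rewrite ?closed_weight_eq0 by exact Hz; ring. }
  destruct j1 as [|j1].
  { rewrite <- closed_rec_00; simpl; ring. }
  destruct i2 as [|i2]; [lia|].
  destruct (Nat.eq_dec j1 J) as [-> | Hne].
  - rewrite (proj2 (Nat.leb_gt (S J) J)), Nat.leb_refl, <- closed_rec_10 by lia; ring.
  - rewrite !(proj2 (Nat.leb_le _ J)) by lia.
    apply (closed_rec_x0 j1 (J - S j1)); lia.
Qed.

Lemma closed_recursion_true (i1 j1 i2 j2 : nat) :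
  (j1 <= S J)%nat -> (i1 + j1 = i2 + S j2)%nat ->
  Cadd (Cmul (closed_or_zero J i1 j1 (S i2) j2 lam_dn)
             (W1 f eta (Z.of_nat (S i2)) false (Z.of_nat i2) true (vcol J) lam Lam))
       (match j1 with
        | S j1' =>
            Cmul (closed_or_zero J i1 j1' i2 j2 lam_up)
                 (W1 f eta (Z.of_nat i2) true (Z.of_nat i2) true (vcol J) lam Lam)
        | O => Czero
        end)
  = closed_weight (S J) i1 j1 i2 (S j2) lam.
Proof.
  intros Hj1 Hc; unfold closed_or_zero.
  destruct j1 as [|j1].
  { rewrite <- closed_rec_01 by lia; simpl; ring. }
  destruct (Nat.eq_dec j1 J) as [-> | Hne].
  - rewrite (proj2 (Nat.leb_gt (S J) J)), Nat.leb_refl, <- closed_rec_11 by lia; ring.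
  - rewrite !(proj2 (Nat.leb_le _ J)) by lia.
    apply (closed_rec_x1 j1 (J - S j1)); lia.
Qed.

End Step.

Lemma nondegenerate_shift (J : nat) (lam : Cplx) (s : Z) :
  (-1 <= s <= 1)%Z -> nondegenerate (S J) lam ->
  nondegenerate J (Cadd lam (two (Cmul eta (ZtoC s)))).
Proof.
  intros Hs [HFe [HFL HFl]]; repeat split; intros c Hc;
    [apply HFe | apply HFL | rewrite Flam_shift; apply HFl]; lia.
Qed.

Lemma WJfused_empty (i : nat) (v lam : Cplx) : WJfused_K f eta Lam 0 i 0 i [] v lam = Cone.
Proof.
  unfold WJfused_K, WJcol, istate; simpl.
  rewrite Z.add_0_r, Z.eqb_refl, (proj2 (Z.leb_le 0 (Z.of_nat i))) by lia; simpl; ring.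
Qed.

Lemma WJfused_closed (N : nat) :
  forall (i1 j1 i2 : nat) (K : list bool) (lam : Cplx),
  length K = N -> (i1 + j1 = i2 + ones K)%nat -> nondegenerate N lam ->
  WJfused_K f eta Lam N i1 j1 i2 K (Copp (Cmul eta Lam)) lam = closed_or_zero N i1 j1 i2 (ones K) lam.
Proof.
  induction N as [|J IH]; intros i1 j1 i2 K lam HK Hc Hnd.
  { destruct K; [|discriminate]; unfold closed_or_zero; change (ones []) with 0%nat in Hc |- *.
    destruct j1 as [|j1]; [|simpl; apply WJfused_too_many_ones; lia].
    replace i2 with i1 by lia; rewrite WJfused_empty, closed_weight_empty; reflexivity. }
  destruct K as [|b K] using rev_ind; [discriminate|]; clear IHK.
  rewrite length_app in HK; simpl in HK; assert (HKJ : length K = J) by lia.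
  destruct (Nat.le_gt_cases j1 (S J)) as [Hj1 | Hj1].
  2:{ unfold closed_or_zero; rewrite (proj2 (Nat.leb_gt _ _) Hj1).
      apply WJfused_too_many_ones; exact Hj1. }
  unfold closed_or_zero at 1; rewrite (proj2 (Nat.leb_le _ _) Hj1).
  pose proof (nondegenerate_shift J lam (-1) ltac:(lia) Hnd) as Hnd_dn.
  pose proof (nondegenerate_shift J lam 1 ltac:(lia) Hnd) as Hnd_up.
  pose proof (ones_snoc b K) as Hones; unfold snoc in Hones; rewrite Hones in Hc |- *.
  destruct Hnd as [HFe [HFL HFl]], b; cbn [Nat.b2n] in Hc |- *.
  - rewrite Nat.add_1_r in Hc |- *.
    rewrite WJfused_snoc_true, IH by (exact HKJ || lia || assumption).
    rewrite <- (closed_recursion_true J lam HFe HFL HFl i1 j1 i2 (ones K)) by lia.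
    destruct j1 as [|j1]; [reflexivity|].
    rewrite IH by (exact HKJ || lia || assumption); reflexivity.
  - rewrite Nat.add_0_r in Hc |- *.
    rewrite WJfused_snoc_false, IH by (exact HKJ || lia || assumption).
    rewrite <- (closed_recursion_false J lam HFe HFL HFl i1 j1 i2 (ones K)) by lia.
    destruct j1 as [|j1], i2 as [|i2]; try reflexivity.
    rewrite IH by (exact HKJ || lia || assumption); reflexivity.
Qed.

End ClosedForm.

Section Pochhammer.

Variables (f : Cplx -> Cplx) (eta Lam lam : Cplx).

Lemma poch_nat (a : Cplx) (k : nat) :
  poch f eta a (Z.of_nat k)
  = Cprod (map (fun m => f (Csub a (Cmul (RtoC 2) (Cmul eta (RtoC (INR m)))))) (seq 0 k)).
Proof.
  unfold poch; rewrite (proj2 (Z.leb_le 0 (Z.of_nat k))), Nat2Z.id by lia; reflexivity.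
Qed.

Lemma poch_Feta (c k : nat) :
  poch f eta (Cmul (RtoC 2) (Cmul eta (RtoC (INR c)))) (Z.of_nat k)
  = prod_down (Feta f eta) (Z.of_nat c) k.
Proof.
  rewrite poch_nat; unfold prod_down; f_equal; apply map_ext; intros m; unfold Feta; f_equal; Cring_num.
Qed.

Lemma poch_FLam (c k : nat) :
  poch f eta (Cmul (RtoC 2) (Cmul eta (Csub Lam (RtoC (INR c))))) (Z.of_nat k)
  = prod_up (FLam f eta Lam) (Z.of_nat c) k.
Proof.
  rewrite poch_nat; unfold prod_up; f_equal; apply map_ext; intros m; unfold FLam; f_equal; Cring_num.
Qed.

Lemma poch_FLam0 (k : nat) :
  poch f eta (Cmul (RtoC 2) (Cmul eta Lam)) (Z.of_nat k) = prod_up (FLam f eta Lam) 0 k.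
Proof.
  rewrite poch_nat; unfold prod_up; f_equal; apply map_ext; intros m; unfold FLam; f_equal; Cring_num.
Qed.

Lemma poch_Flam (c : Z) (k : nat) :
  poch f eta (Cadd lam (Cmul (RtoC 2) (Cmul eta (ZtoC c)))) (Z.of_nat k)
  = prod_down (Flam f eta lam) c k.
Proof.
  rewrite poch_nat; unfold prod_down; f_equal; apply map_ext; intros m; unfold Flam; f_equal; Cring_num.
Qed.

Lemma poch_Flam_nat (c k : nat) :
  poch f eta (Cadd lam (Cmul (RtoC 2) (Cmul eta (RtoC (INR c))))) (Z.of_nat k)
  = prod_down (Flam f eta lam) (Z.of_nat c) k.
Proof.
  rewrite poch_nat; unfold prod_down; f_equal; apply map_ext; intros m; unfold Flam; f_equal; Cring_num.
Qed.

Lemma poch_FlamLam (c d k : nat) :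
  poch f eta (Cadd lam (Cmul (RtoC 2) (Cmul eta
     (Csub (Cadd (RtoC (INR c)) (RtoC (INR d))) (Cadd Lam Cone))))) (Z.of_nat k)
  = prod_down (FlamLam f eta Lam lam) (Z.of_nat c + Z.of_nat d - 1) k.
Proof.
  rewrite poch_nat; unfold prod_down; f_equal; apply map_ext; intros m; unfold FlamLam; f_equal; Cring_num.
Qed.

End Pochhammer.

Theorem theorem3p10_of_product_formula
  (f A B : Cplx -> Cplx)
  (f_prod : forall x y, Cmul (f (Cadd x y)) (f (Csub x y)) = Csub (Cmul (A x) (B y)) (Cmul (B x) (A y)))
  (eta lam Lam : Cplx) (J : nat)
  (i1 i2 j1 j2 : nat) (Hj1 : (j1 <= J)%nat) (Hcons : (i1 + j1 = i2 + j2)%nat)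
  (Hnz_eta : forall n : nat, (1 <= n <= J)%nat ->
       f (Cmul (RtoC 2) (Cmul eta (RtoC (INR n)))) <> Czero)
  (Hnz_Lam : forall n : nat, (n < Nat.max i2 J)%nat ->
       f (Csub (Cmul (RtoC 2) (Cmul eta Lam)) (Cmul (RtoC 2) (Cmul eta (RtoC (INR n))))) <> Czero)
  (Hnz_lam : forall m : Z, (- Z.of_nat J <= m <= Z.of_nat J)%Z ->
       f (Cadd lam (Cmul (RtoC 2) (Cmul eta (ZtoC m)))) <> Czero)
  (K : list bool) (HK : length K = J) (HKj2 : ones K = j2) :
  let P := poch f eta in
  let t := fun x : Cplx => Cmul (RtoC 2) (Cmul eta x) in
  let n := fun k : nat => RtoC (INR k) in
  WJfused_K f eta Lam J i1 j1 i2 K (Copp (Cmul eta Lam)) lam =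
  Cmul (Cpowz (f (t Cone)) (Z.of_nat i2 - Z.of_nat i1))
  (Cmul (Cdiv (Cmul (if Nat.leb j2 i1 then Cone else Czero) (P (t (n J)) (Z.of_nat J)))
              (Cmul (P (t (n j1)) (Z.of_nat j1)) (P (t (n (J - j1)%nat)) (Z.of_nat (J - j1)))))
  (Cmul (Cdiv (P (t Lam) (Z.of_nat i1)) (P (t Lam) (Z.of_nat i2)))
  (Cmul (Cdiv (Cmul (P (t (n i1)) (Z.of_nat j2))
                    (P (t (Csub Lam (n i1))) (Z.of_nat (J - j2))))
              (P (t Lam) (Z.of_nat J)))
        (Cdiv (Cmul (P (Cadd lam (t (n i2))) (Z.of_nat (J - j1)))
                    (P (Cadd lam (t (Csub (Cadd (n i2) (n j1)) (Cadd Lam Cone)))) (Z.of_nat j1)))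
              (Cmul (P (Cadd lam (t (n j1))) (Z.of_nat (J - j1)))
                    (P (Cadd lam (t (ZtoC (2 * Z.of_nat j1 - Z.of_nat J - 1)%Z))) (Z.of_nat j1))))))).
Proof.
  intros P t n.
  assert (Hj2 : (j2 <= J)%nat)
    by (rewrite <- HKj2, <- HK; apply count_occ_bound).
  assert (HFLam : forall c, (0 <= c < Z.of_nat (Nat.max i2 J))%Z -> FLam f eta Lam c <> Czero).
  { intros c Hc; unfold FLam; replace c with (Z.of_nat (Z.to_nat c)) by lia.
    replace (Csub _ _) with (Csub (Cmul (RtoC 2) (Cmul eta Lam))
                                  (Cmul (RtoC 2) (Cmul eta (RtoC (INR (Z.to_nat c)))))) by Cring_num.
    apply Hnz_Lam; lia. }
  assert (Hnd : nondegenerate f eta Lam J lam).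
  { repeat split; intros c Hc.
    - unfold Feta; replace c with (Z.of_nat (Z.to_nat c)) by lia.
      replace (Cmul _ _) with (Cmul (RtoC 2) (Cmul eta (RtoC (INR (Z.to_nat c))))) by Cring_num.
      apply Hnz_eta; lia.
    - apply HFLam; lia.
    - unfold Flam; replace (Cadd _ _) with (Cadd lam (Cmul (RtoC 2) (Cmul eta (ZtoC c)))) by Cring_num.
      apply Hnz_lam; lia. }
  pose proof Hnd as [HFeta [_ HFlam]].
  rewrite (WJfused_closed f A B f_prod eta Lam J i1 j1 i2 K lam), HKj2 by (congruence || assumption).
  unfold closed_or_zero; rewrite (proj2 (Nat.leb_le _ _) Hj1).
  unfold P, t, n; rewrite !poch_Feta, poch_FLam, !poch_FLam0, !poch_Flam_nat, poch_FlamLam, poch_Flam.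
  replace (f (Cmul (RtoC 2) (Cmul eta Cone))) with (Feta f eta 1) by (unfold Feta; f_equal; Cring_num).
  destruct (Nat.leb_spec j2 i1) as [Hle | Hgt].
  - unfold closed_weight, ebinom.
    rewrite (prod_up_transfer _ i1 i2 (J - j2) (J - j1)) by
      (lia || (apply prod_up_neq0; intros; apply HFLam; lia)).
    field; repeat split;
      first [ apply prod_down_neq0; intros; first [apply HFeta; lia | apply HFlam; lia]
            | apply prod_up_neq0; intros; apply HFLam; lia ].
  - rewrite (closed_weight_eq0 f A B f_prod) by exact Hgt; unfold Cdiv; ring.
Qed.

(** * The product formula for [sin (pi z)] *)

Lemma Cexp_add (a b : Cplx) : Cexp (Cadd a b) = Cmul (Cexp a) (Cexp b).
Proof.
  destruct a as [a1 a2], b as [b1 b2]; unfold Cexp; apply Cplx_ext; simpl; rewrite exp_plus.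
  - rewrite cos_plus; ring.
  - rewrite sin_plus; ring.
Qed.

Lemma Cexp_neq0 (a : Cplx) : Cexp a <> Czero.
Proof.
  destruct a as [a1 a2]; unfold Cexp; intros H; injection H as H1 H2.
  pose proof (exp_pos a1); pose proof (sin2_cos2 a2); unfold Rsqr in *.
  apply Rmult_integral in H1, H2.
  destruct H1 as [H1 | H1], H2 as [H2 | H2]; try lra; rewrite H1, H2 in *; lra.
Qed.

Lemma Cexp_opp (a : Cplx) : Cexp (Copp a) = Cinv (Cexp a).
Proof.
  assert (E : Cmul (Cexp (Copp a)) (Cexp a) = Cone).
  { rewrite <- Cexp_add; replace (Cadd (Copp a) a) with Czero by Cring.
    unfold Cexp; apply Cplx_ext; simpl; rewrite ?exp_0, ?cos_0, ?sin_0; ring. }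
  pose proof (Cexp_neq0 a).
  replace (Cexp (Copp a)) with (Cmul (Cmul (Cexp (Copp a)) (Cexp a)) (Cinv (Cexp a))) by (field; assumption).
  rewrite E; ring.
Qed.

Definition epi (z : Cplx) : Cplx := Cexp (Cmul Ci (Cmul CPI z)).

Lemma sinpi_epi (z : Cplx) : sinpi z = Cdiv (Csub (epi z) (Cinv (epi z))) (Cmul (RtoC 2) Ci).
Proof. unfold sinpi, Csin, epi; rewrite Cexp_opp; reflexivity. Qed.

Lemma epi_add (x y : Cplx) : epi (Cadd x y) = Cmul (epi x) (epi y).
Proof. unfold epi; rewrite <- Cexp_add; f_equal; Cring. Qed.

Lemma epi_sub (x y : Cplx) : epi (Csub x y) = Cmul (epi x) (Cinv (epi y)).
Proof. unfold epi; rewrite <- Cexp_opp, <- Cexp_add; f_equal; Cring. Qed.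

Lemma sinpi_prod (x y : Cplx) :
  Cmul (sinpi (Cadd x y)) (sinpi (Csub x y)) =
  Csub (Cmul (Cmul (sinpi x) (sinpi x)) Cone) (Cmul Cone (Cmul (sinpi y) (sinpi y))).
Proof.
  rewrite !sinpi_epi, epi_add, epi_sub.
  pose proof (Cexp_neq0 (Cmul Ci (Cmul CPI x))); pose proof (Cexp_neq0 (Cmul Ci (Cmul CPI y))).
  assert (Hi : Ci <> Czero) by (intros E; injection E; lra).
  assert (H2 : RtoC 2 <> Czero) by (intros E; injection E; lra).
  unfold epi in *; field; repeat split; assumption.
Qed.

(** * The product formula for theta *)

Definition cnorm (z : Cplx) : R := Rabs (re z) + Rabs (im z).

Lemma cnorm_nonneg (z : Cplx) : 0 <= cnorm z.
Proof. unfold cnorm; pose proof (Rabs_pos (re z)); pose proof (Rabs_pos (im z)); lra. Qed.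

Lemma cnorm_add (a b : Cplx) : cnorm (Cadd a b) <= cnorm a + cnorm b.
Proof.
  unfold cnorm; simpl.
  pose proof (Rabs_triang (re a) (re b)); pose proof (Rabs_triang (im a) (im b)); lra.
Qed.

Lemma cnorm_opp (a : Cplx) : cnorm (Copp a) = cnorm a.
Proof. unfold cnorm; simpl; rewrite !Rabs_Ropp; reflexivity. Qed.

Lemma cnorm_mul (a b : Cplx) : cnorm (Cmul a b) <= cnorm a * cnorm b.
Proof.
  destruct a as [a1 a2], b as [b1 b2]; unfold cnorm; simpl.
  pose proof (Rabs_triang (a1 * b1) (- (a2 * b2))); pose proof (Rabs_triang (a1 * b2) (a2 * b1)).
  unfold Rminus; rewrite Rabs_Ropp in *; rewrite !Rabs_mult in *.
  pose proof (Rabs_pos a1); pose proof (Rabs_pos a2); pose proof (Rabs_pos b1); pose proof (Rabs_pos b2).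
  nra.
Qed.

Lemma cnorm_zero : cnorm Czero = 0.
Proof. unfold cnorm; simpl; rewrite Rabs_R0; ring. Qed.

Lemma re_le_cnorm (z : Cplx) : Rabs (re z) <= cnorm z.
Proof. unfold cnorm; pose proof (Rabs_pos (im z)); lra. Qed.

Lemma im_le_cnorm (z : Cplx) : Rabs (im z) <= cnorm z.
Proof. unfold cnorm; pose proof (Rabs_pos (re z)); lra. Qed.

Lemma cnorm_Cexp (w : Cplx) : cnorm (Cexp w) <= 2 * exp (re w).
Proof.
  destruct w as [a b]; unfold cnorm, Cexp; simpl.
  rewrite !Rabs_mult, (Rabs_pos_eq (exp a)) by (left; apply exp_pos).
  pose proof (exp_pos a); pose proof (COS_bound b); pose proof (SIN_bound b).
  assert (Rabs (cos b) <= 1) by (apply Rabs_le; lra).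
  assert (Rabs (sin b) <= 1) by (apply Rabs_le; lra).
  nra.
Qed.

Lemma Cseq_cv_of_cnorm (u : nat -> Cplx) (l : Cplx) :
  Un_cv (fun n => cnorm (Csub (u n) l)) 0 -> Cseq_cv u l.
Proof.
  intros H; split; intros eps Heps; destruct (H eps Heps) as [N HN]; exists N; intros n Hn;
    specialize (HN n Hn); unfold Rdist in *; rewrite Rminus_0_r, Rabs_pos_eq in HN by apply cnorm_nonneg.
  - exact (Rle_lt_trans _ _ _ (re_le_cnorm (Csub (u n) l)) HN).
  - exact (Rle_lt_trans _ _ _ (im_le_cnorm (Csub (u n) l)) HN).
Qed.

Lemma Cseq_cv_cnorm (u : nat -> Cplx) (l : Cplx) :
  Cseq_cv u l -> Un_cv (fun n => cnorm (Csub (u n) l)) 0.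
Proof.
  intros [H1 H2] eps Heps.
  destruct (H1 (eps / 2)) as [N1 HN1]; [lra|]; destruct (H2 (eps / 2)) as [N2 HN2]; [lra|].
  exists (max N1 N2); intros n Hn.
  specialize (HN1 n ltac:(lia)); specialize (HN2 n ltac:(lia)); unfold Rdist in *.
  rewrite Rminus_0_r, Rabs_pos_eq by apply cnorm_nonneg; unfold cnorm; simpl; unfold Rminus in *; lra.
Qed.

Lemma Cseq_cv_mul (u v : nat -> Cplx) (a b : Cplx) :
  Cseq_cv u a -> Cseq_cv v b -> Cseq_cv (fun n => Cmul (u n) (v n)) (Cmul a b).
Proof.
  intros [Hu1 Hu2] [Hv1 Hv2]; split; simpl;
    [apply CV_minus | apply CV_plus]; apply CV_mult; assumption.
Qed.

Lemma Cseq_cv_sub (u v : nat -> Cplx) (a b : Cplx) :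
  Cseq_cv u a -> Cseq_cv v b -> Cseq_cv (fun n => Csub (u n) (v n)) (Csub a b).
Proof. intros [Hu1 Hu2] [Hv1 Hv2]; split; simpl; apply CV_minus; assumption. Qed.

Lemma Cseq_cv_unique (u : nat -> Cplx) (a b : Cplx) : Cseq_cv u a -> Cseq_cv u b -> a = b.
Proof. intros [H1 H2] [H3 H4]; apply Cplx_ext; eapply UL_sequence; eassumption. Qed.

Lemma Cseq_cv_close (u v : nat -> Cplx) (a : Cplx) :
  Cseq_cv u a -> Un_cv (fun n => cnorm (Csub (v n) (u n))) 0 -> Cseq_cv v a.
Proof.
  intros Hu Hd; apply Cseq_cv_of_cnorm; apply Cseq_cv_cnorm in Hu.
  intros eps Heps.
  destruct (Hu (eps / 2)) as [N1 HN1]; [lra|]; destruct (Hd (eps / 2)) as [N2 HN2]; [lra|].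
  exists (max N1 N2); intros n Hn.
  specialize (HN1 n ltac:(lia)); specialize (HN2 n ltac:(lia)).
  unfold Rdist in *; rewrite Rminus_0_r, Rabs_pos_eq in * by apply cnorm_nonneg.
  replace (Csub (v n) a) with (Cadd (Csub (v n) (u n)) (Csub (u n) a)) by Cring.
  pose proof (cnorm_add (Csub (v n) (u n)) (Csub (u n) a)); lra.
Qed.

Lemma Un_cv_squeeze0 (e d : nat -> R) (C : R) :
  (forall n, 0 <= e n <= C * d n) -> Un_cv d 0 -> Un_cv e 0.
Proof.
  intros Hb Hd eps Heps.
  destruct (Hd (eps / (Rabs C + 1))) as [N HN]; [apply Rdiv_lt_0_compat; pose proof (Rabs_pos C); lra|].
  exists N; intros n Hn; specialize (HN n Hn); specialize (Hb n); unfold Rdist in *.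
  rewrite Rminus_0_r in *; rewrite Rabs_pos_eq by lra.
  assert (HC : C * d n <= Rabs C * Rabs (d n))
    by (rewrite <- Rabs_mult; apply Rle_abs).
  assert (Hlt : Rabs C * Rabs (d n) < eps).
  { apply (Rmult_lt_compat_l (Rabs C + 1)) in HN; [|pose proof (Rabs_pos C); lra].
    unfold Rdiv in HN; rewrite <- Rmult_assoc, (Rmult_comm (Rabs C + 1) eps), Rmult_assoc,
      Rinv_r, Rmult_1_r in HN by (pose proof (Rabs_pos C); lra).
    pose proof (Rabs_pos (d n)); nra. }
  lra.
Qed.

Definition Rsum (l : list R) : R := fold_right Rplus 0 l.

Lemma Rsum_app (l1 l2 : list R) : Rsum (l1 ++ l2) = Rsum l1 + Rsum l2.
Proof. induction l1 as [|x l1 IH]; simpl; [lra | rewrite IH; lra]. Qed.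

Lemma Rsum_perm (l1 l2 : list R) : Permutation l1 l2 -> Rsum l1 = Rsum l2.
Proof. induction 1; simpl; lra. Qed.

Lemma Csum_NoDup_eq {A : Type} (g : A -> Cplx) (L1 L2 : list A) :
  NoDup L1 -> NoDup L2 -> (forall x, In x L1 <-> In x L2) -> Csum (map g L1) = Csum (map g L2).
Proof. intros; apply Csum_perm, Permutation_map, NoDup_Permutation; assumption. Qed.

Lemma Rsum_NoDup_eq {A : Type} (g : A -> R) (L1 L2 : list A) :
  NoDup L1 -> NoDup L2 -> (forall x, In x L1 <-> In x L2) -> Rsum (map g L1) = Rsum (map g L2).
Proof. intros; apply Rsum_perm, Permutation_map, NoDup_Permutation; assumption. Qed.

Lemma Rsum_filter {A : Type} (g : A -> R) (P : A -> bool) (L : list A) :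
  Rsum (map g (filter P L)) = Rsum (map (fun x => if P x then g x else 0) L).
Proof.
  induction L as [|a L IH]; simpl; [reflexivity|].
  destruct (P a); simpl; rewrite IH; [reflexivity | lra].
Qed.

Lemma cnorm_Csum {A : Type} (g : A -> Cplx) (L : list A) :
  cnorm (Csum (map g L)) <= Rsum (map (fun x => cnorm (g x)) L).
Proof.
  induction L as [|a L IH]; simpl; [rewrite cnorm_zero; lra|].
  pose proof (cnorm_add (g a) (Csum (map g L))); lra.
Qed.

Lemma Rsum_le {A : Type} (g h : A -> R) (L : list A) :
  (forall x, In x L -> g x <= h x) -> Rsum (map g L) <= Rsum (map h L).
Proof.
  induction L as [|a L IH]; simpl; intros H; [lra|].
  pose proof (H a (or_introl eq_refl)); pose proof (IH (fun x Hx => H x (or_intror Hx))); lra.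
Qed.

Lemma Csum_list_prod {A B : Type} (g : A -> Cplx) (h : B -> Cplx) (L1 : list A) (L2 : list B) :
  Cmul (Csum (map g L1)) (Csum (map h L2))
  = Csum (map (fun p => Cmul (g (fst p)) (h (snd p))) (list_prod L1 L2)).
Proof.
  induction L1 as [|a L1 IH]; simpl; [Cring|].
  rewrite map_app, Csum_app, <- IH, map_map; simpl.
  assert (E : Csum (map (fun x => Cmul (g a) (h x)) L2) = Cmul (g a) (Csum (map h L2))).
  { clear IH; induction L2 as [|b L2 IH2]; simpl; [|rewrite IH2]; ring. }
  rewrite E; ring.
Qed.

Lemma Rsum_list_prod {A B : Type} (g : A -> R) (h : B -> R) (L1 : list A) (L2 : list B) :
  Rsum (map g L1) * Rsum (map h L2)
  = Rsum (map (fun p => g (fst p) * h (snd p)) (list_prod L1 L2)).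
Proof.
  induction L1 as [|a L1 IH]; simpl; [lra|].
  rewrite map_app, Rsum_app, <- IH, map_map; simpl.
  assert (E : Rsum (map (fun x => g a * h x) L2) = g a * Rsum (map h L2)).
  { clear IH; induction L2 as [|b L2 IH2]; simpl; [|rewrite IH2]; ring. }
  rewrite E; lra.
Qed.

Lemma NoDup_list_prod {A B : Type} (L1 : list A) (L2 : list B) :
  NoDup L1 -> NoDup L2 -> NoDup (list_prod L1 L2).
Proof.
  revert L2; induction L1 as [|a L1 IH]; intros L2 H1 H2; simpl; [constructor|].
  inversion H1; subst; apply NoDup_app.
  - apply NoDup_map_NoDup_ForallPairs; [|assumption].
    intros x y _ _ E; injection E; auto.
  - apply IH; assumption.
  - intros [u v] Hu Hv; apply in_map_iff in Hu; destruct Hu as [w [Ew _]]; injection Ew as -> _.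
    apply in_prod_iff in Hv; destruct Hv; contradiction.
Qed.

Definition zrange (K : nat) : list Z :=
  map (fun k => (Z.of_nat k - Z.of_nat K)%Z) (seq 0 (2 * K + 1)).

Lemma in_zrange (K : nat) (m : Z) : In m (zrange K) <-> (- Z.of_nat K <= m <= Z.of_nat K)%Z.
Proof.
  unfold zrange; rewrite in_map_iff; split.
  - intros [k [<- Hk]]; apply in_seq in Hk; lia.
  - intros H; exists (Z.to_nat (m + Z.of_nat K)); split; [lia | apply in_seq; lia].
Qed.

Lemma NoDup_zrange (K : nat) : NoDup (zrange K).
Proof.
  unfold zrange; apply NoDup_map_NoDup_ForallPairs; [|apply seq_NoDup].
  intros x y _ _ E; lia.
Qed.

Lemma Zsym_partial_zrange (a : Z -> Cplx) (N : nat) : Zsym_partial a N = Csum (map a (zrange N)).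
Proof. unfold Zsym_partial, zrange; rewrite map_map; reflexivity. Qed.

Definition zbox (K : nat) : list (Z * Z) := list_prod (zrange K) (zrange K).

Definition in_zboxb (M : nat) (p : Z * Z) : bool :=
  ((Z.abs (fst p) <=? Z.of_nat M) && (Z.abs (snd p) <=? Z.of_nat M))%Z.

Lemma in_zbox (K : nat) (p : Z * Z) : In p (zbox K) <-> in_zboxb K p = true.
Proof.
  destruct p as [m n]; unfold zbox, in_zboxb; rewrite in_prod_iff, !in_zrange; simpl.
  rewrite andb_true_iff, !Z.leb_le; lia.
Qed.

Lemma NoDup_zbox (K : nat) : NoDup (zbox K).
Proof. apply NoDup_list_prod; apply NoDup_zrange. Qed.

Section Geometric.

Variable rho : R.
Hypothesis rho_bounds : 0 < rho < 1.

Definition geo (m : Z) : R := rho ^ (Z.abs_nat m).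
Definition geo_sum (K : nat) : R := Rsum (map geo (zrange K)).
Definition geo_total : R := 1 + 2 * rho / (1 - rho).

Lemma geo_sum_S (K : nat) : geo_sum (S K) = geo_sum K + 2 * rho ^ (S K).
Proof.
  unfold geo_sum.
  rewrite (Rsum_NoDup_eq geo (zrange (S K)) ((- Z.of_nat (S K))%Z :: Z.of_nat (S K) :: zrange K)).
  - change (Rsum (map geo ((- Z.of_nat (S K))%Z :: Z.of_nat (S K) :: zrange K))) with
      (geo (- Z.of_nat (S K))%Z + (geo (Z.of_nat (S K)) + Rsum (map geo (zrange K)))).
    unfold geo at 1 2.
    replace (Z.abs_nat (- Z.of_nat (S K))) with (S K) by lia.
    replace (Z.abs_nat (Z.of_nat (S K))) with (S K) by lia.
    lra.
  - apply NoDup_zrange.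
  - constructor; [|constructor; [|apply NoDup_zrange]].
    + intros [H | H]; [lia|]; apply in_zrange in H; lia.
    + intros H; apply in_zrange in H; lia.
  - intros x; rewrite in_zrange; simpl; rewrite in_zrange; lia.
Qed.

Lemma geo_sum_formula (K : nat) : geo_sum K = geo_total - 2 * rho ^ (S K) / (1 - rho).
Proof.
  induction K as [|K IH].
  - unfold geo_sum, zrange, geo_total, geo; simpl; field; lra.
  - rewrite geo_sum_S, IH; unfold geo_total; simpl; field; lra.
Qed.

Lemma geo_sum_mono (M K : nat) : (M <= K)%nat -> geo_sum M <= geo_sum K.
Proof.
  induction 1 as [|K _ IH]; [lra|].
  rewrite geo_sum_S; pose proof (pow_lt rho (S K) ltac:(lra)); lra.
Qed.

Lemma geo_sum_cv : Un_cv geo_sum geo_total.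
Proof.
  intros eps Heps.
  destruct (pow_lt_1_zero rho ltac:(rewrite Rabs_pos_eq; lra) (eps * (1 - rho) / 2)) as [N HN].
  { apply Rmult_lt_0_compat; [apply Rmult_lt_0_compat|]; lra. }
  exists N; intros n Hn; unfold Rdist; rewrite geo_sum_formula.
  specialize (HN (S n) ltac:(lia)); rewrite Rabs_pos_eq in HN by (apply pow_le; lra).
  pose proof (pow_lt rho (S n) ltac:(lra)).
  replace (geo_total - 2 * rho ^ S n / (1 - rho) - geo_total) with (- (2 * rho ^ S n / (1 - rho))) by ring.
  rewrite Rabs_Ropp, Rabs_pos_eq by (apply Rlt_le, Rdiv_lt_0_compat; lra).
  apply (Rmult_lt_reg_r (1 - rho)); [lra|]; field_simplify; lra.
Qed.

Lemma geo_sum_sq_gap_cv :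
  Un_cv (fun N => geo_sum (2 * N + 1) * geo_sum (2 * N + 1) - geo_sum N * geo_sum N) 0.
Proof.
  assert (Hsub : Un_cv (fun N => geo_sum (2 * N + 1)) geo_total).
  { intros eps Heps; destruct (geo_sum_cv eps Heps) as [N HN]; exists N; intros n Hn; apply HN; lia. }
  replace 0 with (geo_total * geo_total - geo_total * geo_total) by ring.
  apply CV_minus; apply CV_mult; auto using geo_sum_cv.
Qed.

Definition Zpair_dec (p q : Z * Z) : {p = q} + {p <> q}.
Proof. decide equality; apply Z.eq_dec. Defined.

Definition inb (L : list (Z * Z)) (p : Z * Z) : bool := if in_dec Zpair_dec p L then true else false.

Lemma Csum_as_zbox (w : Z * Z -> Cplx) (L : list (Z * Z)) (K : nat) :
  NoDup L -> (forall p, In p L -> In p (zbox K)) ->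
  Csum (map w L) = Csum (map (fun p => if inb L p then w p else Czero) (zbox K)).
Proof.
  intros HL Hsub; rewrite <- Csum_filter; apply Csum_NoDup_eq;
    [assumption | apply NoDup_filter, NoDup_zbox |].
  intros x; rewrite filter_In; unfold inb.
  destruct (in_dec Zpair_dec x L) as [H | H]; split.
  - intros _; split; [apply Hsub, H | reflexivity].
  - intros _; exact H.
  - intros H'; contradiction.
  - intros [_ E]; discriminate.
Qed.

Lemma cnorm_if_diff (w : Cplx) (b1 b2 : bool) :
  cnorm (Csub (if b1 then w else Czero) (if b2 then w else Czero)) <= if Bool.eqb b1 b2 then 0 else cnorm w.
Proof.
  destruct b1, b2; simpl.
  - replace (Csub w w) with Czero by Cring; rewrite cnorm_zero; lra.
  - replace (Csub w Czero) with w by Cring; lra.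
  - replace (Csub Czero w) with (Copp w) by Cring; rewrite cnorm_opp; lra.
  - replace (Csub Czero Czero) with Czero by Cring; rewrite cnorm_zero; lra.
Qed.

Lemma zbox_sum_diff_bound (w : Z * Z -> Cplx) (Cw : R) (L1 L2 : list (Z * Z)) (M K : nat) :
  (M <= K)%nat -> NoDup L1 -> NoDup L2 ->
  (forall p, In p L1 -> In p (zbox K)) -> (forall p, In p L2 -> In p (zbox K)) ->
  (forall p, In p (zbox M) -> In p L1) -> (forall p, In p (zbox M) -> In p L2) ->
  (forall m n, cnorm (w (m, n)) <= Cw * (geo m * geo n)) ->
  cnorm (Csub (Csum (map w L1)) (Csum (map w L2)))
  <= Cw * (geo_sum K * geo_sum K - geo_sum M * geo_sum M).
Proof.
  intros HMK N1 N2 S1 S2 B1 B2 Hw.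
  rewrite (Csum_as_zbox w L1 K), (Csum_as_zbox w L2 K), Csum_sub by assumption.
  eapply Rle_trans; [apply cnorm_Csum|].
  eapply Rle_trans.
  { apply (Rsum_le _ (fun p => if in_zboxb M p then 0 else Cw * (geo (fst p) * geo (snd p)))).
    intros [m n] _; eapply Rle_trans; [apply cnorm_if_diff|].
    destruct (in_zboxb M (m, n)) eqn:E.
    - assert (Hin : In (m, n) (zbox M)) by (apply in_zbox; exact E).
      unfold inb; destruct (in_dec Zpair_dec (m, n) L1), (in_dec Zpair_dec (m, n) L2);
        simpl; try lra; exfalso; auto.
    - pose proof (Hw m n); pose proof (cnorm_nonneg (w (m, n))).
      destruct (Bool.eqb _ _); simpl; lra. }
  right.
  assert (E1 : Rsum (map (fun p => if in_zboxb M p then 0 else Cw * (geo (fst p) * geo (snd p))) (zbox K))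
             = Cw * (Rsum (map (fun p => geo (fst p) * geo (snd p)) (zbox K)) -
                     Rsum (map (fun p => if in_zboxb M p then geo (fst p) * geo (snd p) else 0) (zbox K)))).
  { generalize (zbox K); intros l; induction l as [|p l IH]; simpl; [ring|].
    rewrite IH; destruct (in_zboxb M p); ring. }
  rewrite E1, <- Rsum_filter, (Rsum_NoDup_eq _ (filter (in_zboxb M) (zbox K)) (zbox M)).
  - unfold zbox; rewrite <- !Rsum_list_prod; unfold geo_sum; ring.
  - apply NoDup_filter, NoDup_zbox.
  - apply NoDup_zbox.
  - intros [m n]; rewrite filter_In, !in_zbox; unfold in_zboxb in *; simpl.
    rewrite !andb_true_iff, !Z.leb_le; lia.
Qed.

Lemma zrange_sum_diff_bound (a : Z -> Cplx) (C : R) (M K : nat) :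
  0 <= C -> (forall j, cnorm (a j) <= C * geo j) -> (M <= K)%nat ->
  cnorm (Csub (Csum (map a (zrange K))) (Csum (map a (zrange M)))) <= C * (geo_sum K - geo_sum M).
Proof.
  intros HC Ha HMK.
  assert (Hrestr : forall (T : Type) (sum : list T -> T) (zero : T) (g : Z -> T),
            (forall L1 L2 : list Z, NoDup L1 -> NoDup L2 -> (forall x, In x L1 <-> In x L2) ->
               sum (map g L1) = sum (map g L2)) ->
            (forall l P, sum (map g (filter P l)) = sum (map (fun x => if P x then g x else zero) l)) ->
            sum (map g (zrange M))
            = sum (map (fun j => if (Z.abs j <=? Z.of_nat M)%Z then g j else zero) (zrange K))).
  { intros T sum zero g Hperm Hfilter; rewrite <- Hfilter; apply Hperm;
      [apply NoDup_zrange | apply NoDup_filter, NoDup_zrange |].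
    intros x; rewrite filter_In, !in_zrange, Z.leb_le; lia. }
  rewrite (Hrestr _ Csum Czero a (Csum_NoDup_eq a) (fun l P => Csum_filter a P l)), Csum_sub.
  unfold geo_sum; rewrite (Hrestr _ Rsum 0 geo (Rsum_NoDup_eq geo) (fun l P => Rsum_filter geo P l)).
  eapply Rle_trans; [apply cnorm_Csum|].
  replace (C * _) with
    (Rsum (map (fun j => if (Z.abs j <=? Z.of_nat M)%Z then 0 else C * geo j) (zrange K)))
    by (generalize (zrange K); intros l; induction l as [|j l IH]; simpl; [ring|];
        rewrite IH; destruct (_ <=? _)%Z; ring).
  apply Rsum_le; intros j _; destruct (_ <=? _)%Z.
  - replace (Csub (a j) (a j)) with Czero by Cring; rewrite cnorm_zero; lra.
  - replace (Csub (a j) Czero) with (a j) by Cring; apply Ha.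
Qed.

Lemma zseries_limit (a : Z -> Cplx) :
  (exists C, 0 <= C /\ forall j, cnorm (a j) <= C * geo j) ->
  { l : Cplx | Cseq_cv (fun N => Csum (map a (zrange N))) l }.
Proof.
  intros HC.
  assert (Hcau : forall pr : Cplx -> R, (forall z, Rabs (pr z) <= cnorm z) ->
            (forall u v, pr (Csub u v) = pr u - pr v) -> Cauchy_crit (fun N => pr (Csum (map a (zrange N))))).
  { intros pr Hpr Hsub eps Heps; destruct HC as [C [HC0 HCa]].
    destruct (CV_Cauchy geo_sum (exist _ _ geo_sum_cv) (eps / (C + 1))) as [N HN];
      [apply Rdiv_lt_0_compat; lra|].
    exists N; intros n m Hn Hm; unfold Rdist; rewrite <- Hsub.
    eapply Rle_lt_trans; [apply Hpr|].
    specialize (HN n m Hn Hm); unfold Rdist in HN.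
    assert (Hq : C * Rabs (geo_sum n - geo_sum m) < eps).
    { apply (Rmult_lt_compat_l (C + 1)) in HN; [|lra]; unfold Rdiv in HN.
      rewrite <- Rmult_assoc, (Rmult_comm (C + 1) eps), Rmult_assoc, Rinv_r, Rmult_1_r in HN by lra.
      pose proof (Rabs_pos (geo_sum n - geo_sum m)); nra. }
    destruct (Nat.le_ge_cases m n) as [Hmn | Hnm].
    - pose proof (zrange_sum_diff_bound a C m n HC0 HCa Hmn); pose proof (geo_sum_mono m n Hmn).
      rewrite Rabs_pos_eq in Hq by lra; lra.
    - pose proof (zrange_sum_diff_bound a C n m HC0 HCa Hnm); pose proof (geo_sum_mono n m Hnm).
      replace (Csub (Csum (map a (zrange n))) (Csum (map a (zrange m)))) with
              (Copp (Csub (Csum (map a (zrange m))) (Csum (map a (zrange n))))) by Cring.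
      rewrite cnorm_opp, Rabs_minus_sym, Rabs_pos_eq in * by lra; lra. }
  destruct (R_complete _ (Hcau re re_le_cnorm (fun u v => eq_refl))) as [lr Hr].
  destruct (R_complete _ (Hcau im im_le_cnorm (fun u v => eq_refl))) as [li Hi].
  exists (mkC lr li); split; assumption.
Qed.

End Geometric.

Definition rho0 : R := exp (-1).

Lemma rho0_bounds : 0 < rho0 < 1.
Proof. unfold rho0; split; [apply exp_pos | rewrite <- exp_0; apply exp_increasing; lra]. Qed.

Lemma rho0_pow (n : nat) : rho0 ^ n = exp (- INR n).
Proof.
  induction n as [|n IH]; [simpl; rewrite Ropp_0, exp_0; reflexivity|].
  rewrite S_INR; simpl; rewrite IH; unfold rho0; rewrite <- exp_plus; f_equal; ring.
Qed.

Lemma geo_rho0 (m : Z) : geo rho0 m = exp (- Rabs (IZR m)).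
Proof.
  unfold geo; rewrite rho0_pow; do 2 f_equal.
  rewrite <- abs_IZR, INR_IZR_INZ; f_equal; lia.
Qed.

Lemma exp_le_mono (x y : R) : x <= y -> exp x <= exp y.
Proof. intros [H | ->]; [left; apply exp_increasing, H | right; reflexivity]. Qed.

Lemma exp_neg_abs_le (p j : Z) : (Z.abs j <= Z.abs p)%Z -> exp (- Rabs (IZR p)) <= geo rho0 j.
Proof.
  intros H; rewrite geo_rho0, !Rabs_Zabs; apply exp_le_mono, Ropp_le_contravar, IZR_le; exact H.
Qed.

(* Completing the square. *)
Lemma quadratic_bound (a B x : R) :
  0 < a -> - a * x * x + B * x + Rabs x <= (Rabs B + 1) * (Rabs B + 1) / (4 * a).
Proof.
  intros Ha.
  assert (B * x <= Rabs B * Rabs x) by (rewrite <- Rabs_mult; apply Rle_abs).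
  assert (Rabs x * Rabs x = x * x) by (rewrite <- Rabs_mult; apply Rabs_pos_eq; nra).
  set (q := (Rabs B + 1) / (2 * a)).
  assert (Hq : Rabs B + 1 = 2 * a * q) by (unfold q; field; lra).
  replace ((Rabs B + 1) * (Rabs B + 1) / (4 * a)) with (a * q * q) by (rewrite Hq; field; lra).
  pose proof (Rabs_pos x); pose proof (Rabs_pos B).
  assert (0 <= a * ((Rabs x - q) * (Rabs x - q))) by (apply Rmult_le_pos; [lra | apply Rle_0_sqr]).
  nra.
Qed.

Lemma cnorm_exp_quadratic (w : Cplx) (a B x : R) :
  0 < a -> re w = - a * x * x + B * x ->
  cnorm (Cexp w) <= 2 * exp ((Rabs B + 1) * (Rabs B + 1) / (4 * a)) * exp (- Rabs x).
Proof.
  intros Ha Hw; eapply Rle_trans; [apply cnorm_Cexp|].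
  rewrite Rmult_assoc, <- exp_plus, Hw; apply Rmult_le_compat_l; [lra|].
  pose proof (quadratic_bound a B x Ha); apply exp_le_mono; lra.
Qed.

Lemma theta_term_bound (tau z : Cplx) :
  0 < im tau -> exists C, 0 <= C /\ forall j, cnorm (theta_term tau z j) <= C * geo rho0 j.
Proof.
  intros Ht; pose (a := PI * im tau); pose (B := - 2 * PI * im z).
  assert (Ha : 0 < a) by (unfold a; pose proof PI_RGT_0; nra).
  pose (c := (Rabs B + 1) * (Rabs B + 1) / (4 * a)).
  exists (2 * exp c * exp (1 / 2)); split; [pose proof (exp_pos c); pose proof (exp_pos (1 / 2)); nra|].
  intros j; eapply Rle_trans; [apply (cnorm_exp_quadratic _ a B (IZR j + 1 / 2) Ha)|].
  { unfold theta_term, a, B, CPI, Ci, ZtoC, RtoC; simpl; ring. }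
  rewrite geo_rho0; fold c.
  assert (exp (- Rabs (IZR j + 1 / 2)) <= exp (1 / 2) * exp (- Rabs (IZR j))).
  { rewrite <- exp_plus; apply exp_le_mono.
    unfold Rabs; destruct (Rcase_abs (IZR j)), (Rcase_abs (IZR j + 1 / 2)); lra. }
  pose proof (exp_pos c); nra.
Qed.

(* The terms of the two half-period theta series [sum_j e^{pi i tau p^2 / 2 + 2 pi i p x}]
   over even and odd [p]. *)
Definition half_theta_term (tau x : Cplx) (p : Z) : Cplx :=
  Cexp (Cadd (Cmul (Cmul (Cmul CPI Ci) tau) (RtoC (IZR p * IZR p / 2)))
             (Cmul (Cmul (RtoC 2) (Cmul CPI Ci)) (Cmul (ZtoC p) x))).

Lemma half_theta_term_bound (tau x : Cplx) :
  0 < im tau -> exists C, 0 <= C /\ forall p, cnorm (half_theta_term tau x p) <= C * exp (- Rabs (IZR p)).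
Proof.
  intros Ht; pose (a := PI * im tau / 2); pose (B := - 2 * PI * im x).
  assert (Ha : 0 < a) by (unfold a; pose proof PI_RGT_0; nra).
  exists (2 * exp ((Rabs B + 1) * (Rabs B + 1) / (4 * a))); split;
    [pose proof (exp_pos ((Rabs B + 1) * (Rabs B + 1) / (4 * a))); lra|].
  intros p; apply (cnorm_exp_quadratic _ a B (IZR p) Ha).
  unfold half_theta_term, a, B, CPI, Ci, ZtoC, RtoC; simpl; field.
Qed.

Lemma Cexp_2ipik (k : Z) : Cexp (mkC 0 (2 * PI * IZR k)) = Cone.
Proof.
  unfold Cexp; simpl; rewrite exp_0.
  assert (H : forall n : nat, cos (2 * PI * INR n) = 1 /\ sin (2 * PI * INR n) = 0).
  { intros n; replace (2 * PI * INR n) with (0 + 2 * INR n * PI) by ring.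
    rewrite cos_period, sin_period, cos_0, sin_0; split; reflexivity. }
  destruct (Z_le_gt_dec 0 k).
  - replace k with (Z.of_nat (Z.to_nat k)) by lia; rewrite <- INR_IZR_INZ.
    destruct (H (Z.to_nat k)) as [-> ->]; Cring.
  - replace k with (- Z.of_nat (Z.to_nat (- k)))%Z by lia; rewrite opp_IZR, <- INR_IZR_INZ.
    destruct (H (Z.to_nat (- k))) as [H1 H2].
    replace (2 * PI * - INR (Z.to_nat (- k))) with (- (2 * PI * INR (Z.to_nat (- k)))) by ring.
    rewrite cos_neg, sin_neg, H1, H2; Cring.
Qed.

Lemma Cexp_iPI : Cexp (mkC 0 PI) = Copp Cone.
Proof. unfold Cexp; simpl; rewrite exp_0, cos_PI, sin_PI; Cring. Qed.

Ltac Cfield_num :=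
  apply Cplx_ext; unfold two, CPI, Ci, Csub, Cdiv, ZtoC, RtoC in *;
  cbn [re im Cadd Cmul Copp Cinv Czero Cone];
  repeat first [rewrite minus_IZR | rewrite plus_IZR | rewrite opp_IZR | rewrite mult_IZR]; field.

(* Pairing the indices [(j + l, j - l - 1)] and [(j + l, j - l)] of a product of two
   theta series turns it into products of half-period terms with even and odd index. *)
Lemma theta_term_pair_odd (tau x y : Cplx) (j l : Z) :
  Cmul (theta_term tau (Cadd x y) (j + l)) (theta_term tau (Csub x y) (j - l - 1)) =
  Cmul (half_theta_term tau x (2 * j)) (half_theta_term tau y (2 * l + 1)).
Proof.
  unfold theta_term, half_theta_term; cbv zeta; rewrite <- !Cexp_add.
  match goal with |- Cexp ?L = Cexp ?R =>
    replace L with (Cadd R (mkC 0 (2 * PI * IZR j))) by Cfield_num end.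
  rewrite Cexp_add, Cexp_2ipik; ring.
Qed.

Lemma theta_term_pair_even (tau x y : Cplx) (j l : Z) :
  Cmul (theta_term tau (Cadd x y) (j + l)) (theta_term tau (Csub x y) (j - l)) =
  Copp (Cmul (half_theta_term tau x (2 * j + 1)) (half_theta_term tau y (2 * l))).
Proof.
  unfold theta_term, half_theta_term; cbv zeta; rewrite <- !Cexp_add.
  match goal with |- Cexp ?L = Copp (Cexp ?R) =>
    replace L with (Cadd (Cadd R (mkC 0 (2 * PI * IZR j))) (mkC 0 PI)) by Cfield_num end.
  rewrite !Cexp_add, Cexp_2ipik, Cexp_iPI; ring.
Qed.

Section Theta.

Variable tau : Cplx.
Hypothesis Htau : 0 < im tau.

Lemma even_terms_bound (x : Cplx) :
  exists C, 0 <= C /\ forall j, cnorm (half_theta_term tau x (2 * j)) <= C * geo rho0 j.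
Proof.
  destruct (half_theta_term_bound tau x Htau) as [C [HC H]]; exists C; split; [exact HC|].
  intros j; eapply Rle_trans; [apply H | apply Rmult_le_compat_l, exp_neg_abs_le; [exact HC | lia]].
Qed.

Lemma odd_terms_bound (x : Cplx) :
  exists C, 0 <= C /\ forall j, cnorm (half_theta_term tau x (2 * j + 1)) <= C * geo rho0 j.
Proof.
  destruct (half_theta_term_bound tau x Htau) as [C [HC H]]; exists C; split; [exact HC|].
  intros j; eapply Rle_trans; [apply H | apply Rmult_le_compat_l, exp_neg_abs_le; [exact HC | lia]].
Qed.

Definition theta_even_partial (x : Cplx) (N : nat) : Cplx :=
  Csum (map (fun j => half_theta_term tau x (2 * j)) (zrange N)).
Definition theta_odd_partial (x : Cplx) (N : nat) : Cplx :=
  Csum (map (fun j => half_theta_term tau x (2 * j + 1)) (zrange N)).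

Definition theta_even (x : Cplx) : Cplx :=
  proj1_sig (zseries_limit rho0 rho0_bounds _ (even_terms_bound x)).
Definition theta_odd (x : Cplx) : Cplx :=
  proj1_sig (zseries_limit rho0 rho0_bounds _ (odd_terms_bound x)).

Lemma theta_even_cv (x : Cplx) : Cseq_cv (theta_even_partial x) (theta_even x).
Proof. exact (proj2_sig (zseries_limit rho0 rho0_bounds _ (even_terms_bound x))). Qed.

Lemma theta_odd_cv (x : Cplx) : Cseq_cv (theta_odd_partial x) (theta_odd x).
Proof. exact (proj2_sig (zseries_limit rho0 rho0_bounds _ (odd_terms_bound x))). Qed.

Definition pair_odd (p : Z * Z) : Z * Z := ((fst p + snd p)%Z, (fst p - snd p - 1)%Z).
Definition pair_even (p : Z * Z) : Z * Z := ((fst p + snd p)%Z, (fst p - snd p)%Z).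

Definition paired_zbox (N : nat) : list (Z * Z) := map pair_odd (zbox N) ++ map pair_even (zbox N).

Lemma NoDup_paired_zbox (N : nat) : NoDup (paired_zbox N).
Proof.
  unfold paired_zbox; apply NoDup_app.
  - apply NoDup_map_NoDup_ForallPairs; [|apply NoDup_zbox].
    intros [j l] [j' l'] _ _ E; unfold pair_odd in E; simpl in E; injection E; intros; f_equal; lia.
  - apply NoDup_map_NoDup_ForallPairs; [|apply NoDup_zbox].
    intros [j l] [j' l'] _ _ E; unfold pair_even in E; simpl in E; injection E; intros; f_equal; lia.
  - intros p H1 H2; apply in_map_iff in H1, H2.
    destruct H1 as [[j l] [<- _]], H2 as [[j' l'] [E _]].
    unfold pair_even, pair_odd in E; simpl in E; injection E; intros; lia.
Qed.

Lemma paired_zbox_sub (N : nat) (p : Z * Z) : In p (paired_zbox N) -> In p (zbox (2 * N + 1)).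
Proof.
  unfold paired_zbox; intros H; apply in_app_or in H; apply in_zbox.
  destruct H as [H | H]; apply in_map_iff in H; destruct H as [[j l] [<- Hjl]]; apply in_zbox in Hjl;
    unfold in_zboxb, pair_even, pair_odd in *; simpl in *; rewrite andb_true_iff, !Z.leb_le in *; lia.
Qed.

Lemma paired_zbox_sup (N : nat) (p : Z * Z) : In p (zbox N) -> In p (paired_zbox N).
Proof.
  destruct p as [m n]; intros H; apply in_zbox in H; unfold in_zboxb in H; simpl in H.
  rewrite andb_true_iff, !Z.leb_le in H; unfold paired_zbox; apply in_or_app.
  destruct (Z.Even_or_Odd (m + n)) as [[k Hk] | [k Hk]].
  - right; apply in_map_iff; exists (k, (m - k)%Z); unfold pair_even; simpl; split; [f_equal; lia|].
    apply in_zbox; unfold in_zboxb; simpl; rewrite andb_true_iff, !Z.leb_le; lia.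
  - left; apply in_map_iff; exists ((k + 1)%Z, (m - k - 1)%Z); unfold pair_odd; simpl; split; [f_equal; lia|].
    apply in_zbox; unfold in_zboxb; simpl; rewrite andb_true_iff, !Z.leb_le; lia.
Qed.

(* The [N]-th partial products of both sides of [theta_prod] are sums of the same
   terms over [zbox N] and over [paired_zbox N], which both lie in [zbox (2N+1)]. *)
Lemma theta_partial_product_error (x y : Cplx) (Ca Cb : R) (N : nat) :
  0 <= Ca -> 0 <= Cb ->
  (forall j, cnorm (theta_term tau (Cadd x y) j) <= Ca * geo rho0 j) ->
  (forall j, cnorm (theta_term tau (Csub x y) j) <= Cb * geo rho0 j) ->
  cnorm (Csub (Cmul (Zsym_partial (theta_term tau (Cadd x y)) N) (Zsym_partial (theta_term tau (Csub x y)) N))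
              (Csub (Cmul (theta_even_partial x N) (theta_odd_partial y N))
                    (Cmul (theta_odd_partial x N) (theta_even_partial y N))))
  <= (Ca * Cb) * (geo_sum rho0 (2 * N + 1) * geo_sum rho0 (2 * N + 1) - geo_sum rho0 N * geo_sum rho0 N).
Proof.
  intros HCa HCb Ha Hb.
  pose (w := fun p : Z * Z => Cmul (theta_term tau (Cadd x y) (fst p)) (theta_term tau (Csub x y) (snd p))).
  assert (EV : Cmul (Zsym_partial (theta_term tau (Cadd x y)) N) (Zsym_partial (theta_term tau (Csub x y)) N)
               = Csum (map w (zbox N)))
    by (rewrite !Zsym_partial_zrange, Csum_list_prod; reflexivity).
  assert (EU : Csub (Cmul (theta_even_partial x N) (theta_odd_partial y N))
                    (Cmul (theta_odd_partial x N) (theta_even_partial y N))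
               = Csum (map w (paired_zbox N))).
  { unfold theta_even_partial, theta_odd_partial, paired_zbox, zbox.
    rewrite !Csum_list_prod, map_app, Csum_app, !map_map.
    rewrite (Csum_ext (fun p => Cmul (half_theta_term tau x (2 * fst p))
                                     (half_theta_term tau y (2 * snd p + 1)))
                      (fun p => w (pair_odd p)))
      by (intros [j l] _; unfold w, pair_odd; simpl; symmetry; apply theta_term_pair_odd).
    rewrite (Csum_ext (fun p => Cmul (half_theta_term tau x (2 * fst p + 1))
                                     (half_theta_term tau y (2 * snd p)))
                      (fun p => Copp (w (pair_even p))))
      by (intros [j l] _; unfold w, pair_even; simpl; rewrite theta_term_pair_even; Cring).
    rewrite Csum_map_opp; ring. }
  rewrite EV, EU.
  apply (zbox_sum_diff_bound rho0 w (Ca * Cb) (zbox N) (paired_zbox N) N (2 * N + 1)).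
  - lia.
  - apply NoDup_zbox.
  - apply NoDup_paired_zbox.
  - intros [m n] Hp; apply in_zbox; apply in_zbox in Hp; unfold in_zboxb in *; simpl in *.
    rewrite andb_true_iff, !Z.leb_le in *; lia.
  - apply paired_zbox_sub.
  - auto.
  - apply paired_zbox_sup.
  - intros m n; unfold w; simpl; eapply Rle_trans; [apply cnorm_mul|].
    replace (Ca * Cb * (geo rho0 m * geo rho0 n)) with ((Ca * geo rho0 m) * (Cb * geo rho0 n)) by ring.
    apply Rmult_le_compat; auto using cnorm_nonneg.
Qed.

Variable th : Cplx -> Cplx.
Hypothesis Hth : is_theta tau th.

Lemma theta_prod (x y : Cplx) :
  Cmul (th (Cadd x y)) (th (Csub x y))
  = Csub (Cmul (theta_even x) (theta_odd y)) (Cmul (theta_odd x) (theta_even y)).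
Proof.
  assert (HU : Cseq_cv (fun N => Csub (Cmul (theta_even_partial x N) (theta_odd_partial y N))
                                      (Cmul (theta_odd_partial x N) (theta_even_partial y N)))
                       (Csub (Cmul (theta_even x) (theta_odd y)) (Cmul (theta_odd x) (theta_even y))))
    by (apply Cseq_cv_sub; apply Cseq_cv_mul; auto using theta_even_cv, theta_odd_cv).
  assert (HV : Cseq_cv (fun N => Cmul (Zsym_partial (theta_term tau (Cadd x y)) N)
                                      (Zsym_partial (theta_term tau (Csub x y)) N))
                       (Cmul (Copp (th (Cadd x y))) (Copp (th (Csub x y)))))
    by (apply Cseq_cv_mul; apply Hth).
  destruct (theta_term_bound tau (Cadd x y) Htau) as [Ca [HCa Ha]].
  destruct (theta_term_bound tau (Csub x y) Htau) as [Cb [HCb Hb]].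
  assert (HV' : Cseq_cv (fun N => Cmul (Zsym_partial (theta_term tau (Cadd x y)) N)
                                       (Zsym_partial (theta_term tau (Csub x y)) N))
                        (Csub (Cmul (theta_even x) (theta_odd y)) (Cmul (theta_odd x) (theta_even y)))).
  { apply (Cseq_cv_close _ _ _ HU).
    apply (Un_cv_squeeze0 _ (fun N => geo_sum rho0 (2 * N + 1) * geo_sum rho0 (2 * N + 1)
                                      - geo_sum rho0 N * geo_sum rho0 N) (Ca * Cb));
      [|apply geo_sum_sq_gap_cv, rho0_bounds].
    intros N; split; [apply cnorm_nonneg | apply theta_partial_product_error; assumption]. }
  rewrite <- (Cseq_cv_unique _ _ _ HV HV'); ring.
Qed.

End Theta.

Theorem theorem3p10
  (eta tau lam Lam : Cplx) (Htau : 0 < im tau)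
  (f : Cplx -> Cplx) (Hf : f = sinpi \/ is_theta tau f)
  (J : nat) (HJ : (0 < J)%nat)
  (i1 i2 j1 j2 : nat) (Hj1 : (j1 <= J)%nat) (Hj2 : (j2 <= J)%nat)
  (Hcons : (i1 + j1 = i2 + j2)%nat)
  (* genericity: all denominators occurring are nonzero *)
  (Hnz_eta : forall n : nat, (1 <= n <= J)%nat ->
       f (Cmul (RtoC 2) (Cmul eta (RtoC (INR n)))) <> Czero)
  (Hnz_Lam : forall n : nat, (n < Nat.max i2 J)%nat ->
       f (Csub (Cmul (RtoC 2) (Cmul eta Lam)) (Cmul (RtoC 2) (Cmul eta (RtoC (INR n))))) <> Czero)
  (Hnz_lam : forall m : Z, (- Z.of_nat J <= m <= Z.of_nat J)%Z ->
       f (Cadd lam (Cmul (RtoC 2) (Cmul eta (ZtoC m)))) <> Czero)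
  (K : list bool) (HK : length K = J) (HKj2 : ones K = j2) :
  let P := poch f eta in
  let t := fun x : Cplx => Cmul (RtoC 2) (Cmul eta x) in
  let n := fun k : nat => RtoC (INR k) in
  WJfused_K f eta Lam J i1 j1 i2 K (Copp (Cmul eta Lam)) lam =
  Cmul (Cpowz (f (t Cone)) (Z.of_nat i2 - Z.of_nat i1))
  (Cmul (Cdiv (Cmul (if Nat.leb j2 i1 then Cone else Czero) (P (t (n J)) (Z.of_nat J)))
              (Cmul (P (t (n j1)) (Z.of_nat j1)) (P (t (n (J - j1)%nat)) (Z.of_nat (J - j1)))))
  (Cmul (Cdiv (P (t Lam) (Z.of_nat i1)) (P (t Lam) (Z.of_nat i2)))
  (Cmul (Cdiv (Cmul (P (t (n i1)) (Z.of_nat j2))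
                    (P (t (Csub Lam (n i1))) (Z.of_nat (J - j2))))
              (P (t Lam) (Z.of_nat J)))
        (Cdiv (Cmul (P (Cadd lam (t (n i2))) (Z.of_nat (J - j1)))
                    (P (Cadd lam (t (Csub (Cadd (n i2) (n j1)) (Cadd Lam Cone)))) (Z.of_nat j1)))
              (Cmul (P (Cadd lam (t (n j1))) (Z.of_nat (J - j1)))
                    (P (Cadd lam (t (ZtoC (2 * Z.of_nat j1 - Z.of_nat J - 1)%Z))) (Z.of_nat j1))))))).
Proof.
  destruct Hf as [-> | Hth].
  - exact (theorem3p10_of_product_formula sinpi (fun x => Cmul (sinpi x) (sinpi x)) (fun _ => Cone)
             sinpi_prod eta lam Lam J i1 i2 j1 j2 Hj1 Hcons Hnz_eta Hnz_Lam Hnz_lam K HK HKj2).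
  - exact (theorem3p10_of_product_formula f (theta_even tau Htau) (theta_odd tau Htau)
             (theta_prod tau Htau f Hth) eta lam Lam J i1 i2 j1 j2 Hj1 Hcons
             Hnz_eta Hnz_Lam Hnz_lam K HK HKj2).
Qed.
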